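(* Let $|q|<1$ and let $(\alpha_n(a,q),\beta_n(a,q))$ be sequences depending on $a$ and base $q$ such that $(\alpha_n(a,q),\beta_n(a,q))$ and $(\alpha_n(-a,q),\beta_n(-a,q))$ are Bailey pairs with respect to $a$ and $-a$ respectively (base $q$), and $(\alpha_n(a^2,q^2),\beta_n(a^2,q^2))$ is a Bailey pair with respect to $a^2$ with base $q^2$. Assume $|qa|<|z|$, no denominator vanishes, and all series converge absolutely. Then \begin{multline*} \sum_{n=1}^{\infty} (z;q)_{n}(q;q)_{n-1} \left( \frac{q a}{ z}\right )^{n} \beta_n(a,q) + \sum_{n=1}^{\infty}(z;q)_{n}(q;q)_{n-1}\left( \frac{-q a}{ z }\right )^{n}\beta_n(-a,q) -2 \sum_{n=1}^{\infty}(z^2;q^2)_{n}(q^2;q^2)_{n-1}\left( \frac{q^2 a^2}{ z^2 }\right )^{n}\beta_n(a^2,q^2)\\ =\sum_{n=1}^{\infty}\frac{(z;q)_{n}(q;q)_{n-1}}{(q a ,q a/z;q)_n}\left (\frac{q a}{z}\right)^{n}\alpha_n(a,q) +\sum_{n=1}^{\infty}\frac{(z;q)_{n}(q;q)_{n-1}}{(-q a ,-q a/z;q)_n}\left (\frac{-q a}{z}\right)^{n}\alpha_n(-a,q) -2\sum_{n=1}^{\infty}\frac{(z^2;q^2)_{n}(q^2;q^2)_{n-1}}{(q^2 a^2 ,q^2a^2/z^2;q^2)_n}\left (\frac{q^2a^2}{z^2}\right)^{n}\alpha_n(a^2,q^2). \end{multline*}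
   Context: Notation: $(x;q)_n=(1-x)(1-xq)\cdots(1-xq^{n-1})$, $(x;q)_0=1$, $(x_1,\dots,x_m;q)_n=(x_1;q)_n\cdots(x_m;q)_n$. A Bailey pair with respect to $a$ (base $q$) is a pair of sequences $(\alpha_n,\beta_n)_{n\ge0}$ with $\alpha_0=\beta_0=1$ and, for $n>0$, $\beta_n=\sum_{j=0}^{n}\frac{\alpha_j}{(q;q)_{n-j}(aq;q)_{n+j}}$. *)

From Stdlib Require Import Reals.
Open Scope R_scope.

Record Cx : Type := mkC { Re : R; Im : R }.

Definition RtoC (x : R) : Cx := mkC x 0.
Definition C0 : Cx := RtoC 0.
Definition C1 : Cx := RtoC 1.
Definition Cadd (u v : Cx) : Cx := mkC (Re u + Re v) (Im u + Im v).
Definition Copp (u : Cx) : Cx := mkC (- Re u) (- Im u).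
Definition Csub (u v : Cx) : Cx := Cadd u (Copp v).
Definition Cmul (u v : Cx) : Cx :=
  mkC (Re u * Re v - Im u * Im v) (Re u * Im v + Im u * Re v).
Definition Cinv (u : Cx) : Cx :=
  let d := Re u * Re u + Im u * Im u in mkC (Re u / d) (- Im u / d).
Definition Cdiv (u v : Cx) : Cx := Cmul u (Cinv v).
Fixpoint Cpow (u : Cx) (n : nat) : Cx :=
  match n with O => C1 | S m => Cmul (Cpow u m) u end.
Definition Cnorm (u : Cx) : R := sqrt (Re u * Re u + Im u * Im u).

Fixpoint qpoch (x q : Cx) (n : nat) : Cx :=
  match n with
  | O => C1
  | S m => Cmul (qpoch x q m) (Csub C1 (Cmul x (Cpow q m)))
  end.

Fixpoint Csum0 (f : nat -> Cx) (n : nat) : Cx :=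
  match n with O => f O | S m => Cadd (Csum0 f m) (f (S m)) end.

Fixpoint Cpartial1 (f : nat -> Cx) (N : nat) : Cx :=
  match N with O => C0 | S m => Cadd (Cpartial1 f m) (f (S m)) end.

Definition Cseries1_to (f : nat -> Cx) (l : Cx) : Prop :=
  forall eps : R, eps > 0 ->
    exists N : nat, forall n : nat, (n >= N)%nat -> Cnorm (Csub (Cpartial1 f n) l) < eps.

Definition Cseries1_abs_conv (f : nat -> Cx) : Prop :=
  exists M : R, Un_cv (fun N => sum_f_R0 (fun k => Cnorm (f (S k))) N) M.

Definition bailey_pair (a q : Cx) (alpha beta : nat -> Cx) : Prop :=
  alpha O = C1 /\ beta O = C1 /\
  forall n : nat, (n > 0)%nat ->
    beta n = Csum0 (fun j => Cdiv (alpha j)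
                     (Cmul (qpoch q q (n - j)) (qpoch (Cmul a q) q (n + j)))) n.

(* Put x = qa/z.  For one Bailey pair, expanding beta_n by the Bailey relation and
   summing the resulting triangular array by columns gives (bailey_transform)
        sum_(n>=1) beta-term_n - sum_(n>=1) alpha-term_n = F(z,q,x),
        F(z,q,x) = sum_(n>=1) (z;q)_n x^n / ((xz;q)_n (1 - q^n)):
   column j >= 1 sums to the coefficient of alpha_j (col_partial_conv, by a
   recursion in j), column 0 is F, and the absolute convergence of the alpha-series
   controls the truncation errors.  The three pairs of the corollary produce
   F(z,q,x), F(z,q,-x) and F(z^2,q^2,x^2), so it remains to prove the parity
   identity F(z,q,x) + F(z,q,-x) = 2 F(z^2,q^2,x^2) (parity_identity).  Its
   left-minus-right side G is invariant under z -> zq, since F(z) - F(zq) = -xz/(1-xz)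
   and these three explicit terms cancel; hence G(z) = G(zq^m) -> G(0) = 0, where
   the last equality splits sum x^n/(1-q^n) into even and odd n. *)

From Stdlib Require Import Reals Lra Lia FunctionalExtensionality.
From Coquelicot Require Import Coquelicot.
Open Scope C_scope.

Fixpoint qp (x q : C) (n : nat) : C :=
  match n with O => 1 | S m => qp x q m * (1 - x * q ^ m) end.

Fixpoint csum (f : nat -> C) (n : nat) : C :=
  match n with O => 0 | S m => csum f m + f m end.
Fixpoint rsum (f : nat -> R) (n : nat) : R :=
  match n with O => 0%R | S m => (rsum f m + f m)%R end.

Definition conv (s : nat -> C) (l : C) : Prop :=
  forall eps : R, (eps > 0)%R ->
    exists N : nat, forall n : nat, (n >= N)%nat -> (Cmod (s n - l) < eps)%R.

Definition conv1 (f : nat -> C) (l : C) : Prop := conv (fun N => csum (fun k => f (S k)) N) l.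

Lemma Cmod_sub_le (x y : C) : (Cmod (x - y) <= Cmod x + Cmod y)%R.
Proof. unfold Cminus. eapply Rle_trans; [apply Cmod_triangle|]. rewrite Cmod_opp. lra. Qed.

Lemma Cmod_rev (x y : C) : (Cmod x - Cmod y <= Cmod (x - y))%R.
Proof.
  assert (H := Cmod_triangle (x - y) y).
  replace (x - y + y) with x in H by ring. lra.
Qed.

Lemma Cmod_1_sub (x : C) : (1 - Cmod x <= Cmod (1 - x))%R.
Proof. assert (H := Cmod_rev 1 x). rewrite Cmod_1 in H. exact H. Qed.

Lemma Cmod_pos_of_ne (x : C) : x <> 0 -> (0 < Cmod x)%R.
Proof. intros H. apply Cmod_gt_0, H. Qed.

Lemma one_sub_ne0 (x : C) : (Cmod x < 1)%R -> 1 - x <> 0.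
Proof. intros H E. assert (H2 := Cmod_1_sub x). rewrite E, Cmod_0 in H2. lra. Qed.

Lemma Cmod_comb (a1 a2 a3 : C) :
  (Cmod (a1 + a2 - 2 * a3) <= Cmod a1 + Cmod a2 + 2 * Cmod a3)%R.
Proof.
  eapply Rle_trans; [apply Cmod_sub_le|]. rewrite Cmod_mult.
  replace (Cmod 2) with 2%R by (rewrite Cmod_R, Rabs_pos_eq; lra).
  assert (H := Cmod_triangle a1 a2). lra.
Qed.

Lemma pow_le_1 (r : R) n : (0 <= r <= 1)%R -> (r ^ n <= 1)%R.
Proof. intros Hr. rewrite <- (pow1 n). apply pow_incr. exact Hr. Qed.

Lemma Cmod_pow_le1 (q : C) n : (Cmod q < 1)%R -> (Cmod (q ^ n) <= 1)%R.
Proof. intros. rewrite Cmod_pow. apply pow_le_1. split; [apply Cmod_ge_0|lra]. Qed.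

Lemma Cmod_mul_pow_le (w q : C) n : (Cmod q < 1)%R -> (Cmod (w * q ^ n) <= Cmod w)%R.
Proof.
  intros Hq. rewrite Cmod_mult. assert (H := Cmod_pow_le1 q n Hq).
  assert (0 <= Cmod w)%R by apply Cmod_ge_0. assert (0 <= Cmod (q ^ n))%R by apply Cmod_ge_0. nra.
Qed.

Lemma one_sub_powS_lb (q : C) n : (Cmod q < 1)%R -> (1 - Cmod q <= Cmod (1 - q ^ S n))%R.
Proof.
  intros hq. eapply Rle_trans; [|apply Cmod_1_sub].
  assert (H := Cmod_mul_pow_le q q n hq). rewrite Cpow_S. lra.
Qed.

Lemma one_sub_powS_ne0 (q : C) n : (Cmod q < 1)%R -> 1 - q ^ S n <> 0.
Proof.
  intros hq E. assert (H := one_sub_powS_lb q n hq). rewrite E, Cmod_0 in H. lra.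
Qed.

Lemma Cmod_sq_lt1 (q : C) : (Cmod q < 1)%R -> (Cmod (q * q) < 1)%R.
Proof. intros. rewrite Cmod_mult. assert (0 <= Cmod q)%R by apply Cmod_ge_0. nra. Qed.

Lemma Cmod_sq_pow_le (x : C) N : (Cmod x < 1)%R -> (Cmod (x * x) ^ N <= Cmod x ^ N)%R.
Proof.
  intros. rewrite Cmod_mult, Rpow_mult_distr.
  assert (0 <= Cmod x ^ N)%R by (apply pow_le, Cmod_ge_0).
  assert (Cmod x ^ N <= 1)%R by (apply pow_le_1; split; [apply Cmod_ge_0|lra]). nra.
Qed.

Lemma Cmod_div_le (a b : C) (A d : R) : b <> 0 -> (Cmod a <= A)%R -> (0 < d)%R ->
  (d <= Cmod b)%R -> (Cmod (a / b) <= A / d)%R.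
Proof.
  intros Hb Ha Hd Hdb. rewrite Cmod_div by auto. unfold Rdiv.
  apply Rmult_le_compat; auto. apply Cmod_ge_0.
  left. apply Rinv_0_lt_compat. lra. apply Rinv_le_contravar; auto.
Qed.

Lemma csum_ext (f g : nat -> C) n : (forall k, (k < n)%nat -> f k = g k) -> csum f n = csum g n.
Proof.
  induction n; simpl; intros H; auto.
  rewrite IHn, (H n); [reflexivity | lia | intros k Hk; apply H; lia].
Qed.

Lemma csum_scal (f : nat -> C) c n : csum (fun k => c * f k) n = c * csum f n.
Proof. induction n; simpl. ring. rewrite IHn. ring. Qed.

Lemma csum_add (f g : nat -> C) n : csum (fun k => f k + g k) n = csum f n + csum g n.
Proof. induction n; simpl. ring. rewrite IHn. ring. Qed.

Lemma csum_sub (f g : nat -> C) n : csum (fun k => f k - g k) n = csum f n - csum g n.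
Proof. induction n; simpl. ring. rewrite IHn. ring. Qed.

Lemma csum_split (f : nat -> C) m k : csum f (m + k) = csum f m + csum (fun i => f (m + i)%nat) k.
Proof. induction k; simpl. rewrite Nat.add_0_r. ring. rewrite Nat.add_succ_r. simpl. rewrite IHk. ring. Qed.

Lemma csum_shift (f : nat -> C) N : csum f (S N) = f 0%nat + csum (fun k => f (S k)) N.
Proof. induction N; simpl in *. ring. rewrite IHN. ring. Qed.

Lemma csum_telescope (w : nat -> C) n : csum (fun k => w k - w (S k)) n = w 0%nat - w n.
Proof. induction n; simpl. ring. rewrite IHn. ring. Qed.

Lemma csum_triangle (a : nat -> nat -> C) N :
  csum (fun n => csum (a n) (S n)) N = csum (fun j => csum (fun k => a (j + k)%nat j) (N - j)) N.
Proof.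
  induction N; [reflexivity|].
  change (csum (fun n => csum (a n) (S n)) (S N))
    with (csum (fun n => csum (a n) (S n)) N + (csum (a N) N + a N N)).
  change (csum (fun j => csum (fun k => a (j + k)%nat j) (S N - j)) (S N))
    with (csum (fun j => csum (fun k => a (j + k)%nat j) (S N - j)) N
          + csum (fun k => a (N + k)%nat N) (S N - N)).
  replace (S N - N)%nat with 1%nat by lia.
  rewrite IHN, (csum_ext (fun j => csum (fun k => a (j + k)%nat j) (S N - j))
                         (fun j => csum (fun k => a (j + k)%nat j) (N - j) + a N j)).
  - rewrite csum_add. simpl. rewrite Nat.add_0_r. ring.
  - intros j Hj. replace (S N - j)%nat with (S (N - j)) by lia. simpl.
    replace (j + (N - j))%nat with N by lia. reflexivity.
Qed.

Lemma Cmod_csum_le (f : nat -> C) n : (Cmod (csum f n) <= rsum (fun k => Cmod (f k)) n)%R.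
Proof. induction n; simpl. rewrite Cmod_0. lra. eapply Rle_trans; [apply Cmod_triangle|]. lra. Qed.

Lemma rsum_le (f g : nat -> R) n : (forall k, (k < n)%nat -> f k <= g k)%R -> (rsum f n <= rsum g n)%R.
Proof. induction n; simpl; intros H. lra. assert (H1 := H n ltac:(lia)). assert (rsum f n <= rsum g n)%R by (apply IHn; intros; apply H; lia). lra. Qed.

Lemma rsum_nonneg (f : nat -> R) n : (forall k, 0 <= f k)%R -> (0 <= rsum f n)%R.
Proof. intros H; induction n; simpl. lra. specialize (H n). lra. Qed.

Lemma rsum_scal (f : nat -> R) c n : (rsum (fun k => c * f k) n = c * rsum f n)%R.
Proof. induction n; simpl. ring. rewrite IHn. ring. Qed.

Lemma rsum_split (f : nat -> R) m k : (rsum f (m + k) = rsum f m + rsum (fun i => f (m + i)%nat) k)%R.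
Proof. induction k; simpl. rewrite Nat.add_0_r. ring. rewrite Nat.add_succ_r. simpl. rewrite IHk. ring. Qed.

Lemma rsum_geom_le (r : R) n : (0 <= r < 1)%R -> (rsum (fun k => r ^ k) n <= / (1 - r))%R.
Proof.
  intros Hr. assert (H : (rsum (fun k => r ^ k) n * (1 - r) = 1 - r ^ n)%R).
  { induction n; simpl. ring. rewrite Rmult_plus_distr_r, IHn. ring. }
  assert (0 <= r ^ n)%R by (apply pow_le; lra).
  apply (Rmult_le_reg_r (1 - r)). lra. rewrite H, Rinv_l by lra. lra.
Qed.

Lemma qp_S (x q : C) n : qp x q (S n) = qp x q n * (1 - x * q ^ n).
Proof. reflexivity. Qed.

Lemma qp_add (x q : C) m k : qp x q (m + k) = qp x q m * qp (x * q ^ m) q k.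
Proof.
  induction k; simpl. rewrite Nat.add_0_r. ring.
  rewrite Nat.add_succ_r. simpl. rewrite IHk, Cpow_add_r. ring.
Qed.

Lemma qp_S_left (x q : C) n : qp x q (S n) = (1 - x) * qp (x * q) q n.
Proof.
  replace (S n) with (1 + n)%nat by lia. rewrite qp_add. simpl.
  replace (x * (q * 1)) with (x * q) by ring. ring.
Qed.

Lemma qp_zero (q : C) n : qp 0 q n = 1.
Proof. induction n; simpl; auto. rewrite IHn. ring. Qed.

Lemma qp_qq_ne0 (q : C) n : (Cmod q < 1)%R -> qp q q n <> 0.
Proof.
  intros H. induction n; simpl. apply C1_nz.
  apply Cmult_neq_0; auto. apply (one_sub_powS_ne0 q n H).
Qed.

Lemma qp_factor_ne0 (c q : C) n : (forall m, qp c q m <> 0) -> 1 - c * q ^ n <> 0.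
Proof. intros H E. apply (H (S n)). simpl. rewrite E. ring. Qed.

Lemma qp_shift_ne0 (c q : C) m k : (forall m, qp c q m <> 0) -> qp (c * q ^ m) q k <> 0.
Proof. intros hc E. apply (hc (m + k)%nat). rewrite qp_add, E. ring. Qed.

(* a uniform upper bound for |(w;q)_n| *)
Definition qp_bound (w q : C) : R := exp (Cmod w / (1 - Cmod q)).

Lemma qp_bound_pos w q : (0 < qp_bound w q)%R.
Proof. apply exp_pos. Qed.

Lemma exp_le_mono (x y : R) : (x <= y)%R -> (exp x <= exp y)%R.
Proof. intros [H|H]; [left; apply exp_increasing; exact H|subst; lra]. Qed.

Lemma qp_bound_mono (w w' q : C) : (Cmod q < 1)%R -> (Cmod w <= Cmod w')%R ->
  (qp_bound w q <= qp_bound w' q)%R.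
Proof.
  intros Hq H. apply exp_le_mono. unfold Rdiv. apply Rmult_le_compat_r; auto.
  left. apply Rinv_0_lt_compat. lra.
Qed.

Lemma qp_bound_le3 (w q : C) : (Cmod q < 1)%R -> (Cmod w <= 1 - Cmod q)%R -> (qp_bound w q <= 3)%R.
Proof.
  intros hq Hw. eapply Rle_trans; [apply exp_le_mono with (y := 1%R)|apply exp_le_3].
  apply (Rmult_le_reg_r (1 - Cmod q)). lra. unfold Rdiv. rewrite Rmult_assoc, Rinv_l by lra. lra.
Qed.

Lemma geom_weight_le (w q : C) n : (Cmod q < 1)%R ->
  (Cmod w * rsum (fun k => Cmod q ^ k) n <= Cmod w / (1 - Cmod q))%R.
Proof.
  intros Hq. apply Rmult_le_compat_l. apply Cmod_ge_0.
  apply rsum_geom_le. split; [apply Cmod_ge_0|lra].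
Qed.

(* |(w;q)_n| <= prod (1 + |w||q|^k) <= exp (|w| / (1 - |q|)) *)
Lemma qp_upper (w q : C) n : (Cmod q < 1)%R -> (Cmod (qp w q n) <= qp_bound w q)%R.
Proof.
  intros Hq. eapply Rle_trans; [|apply exp_le_mono, (geom_weight_le w q n Hq)].
  induction n; simpl. rewrite Cmod_1, Rmult_0_r, exp_0. lra.
  rewrite Cmod_mult, Rmult_plus_distr_l, exp_plus.
  apply Rmult_le_compat; try apply Cmod_ge_0; auto.
  eapply Rle_trans; [apply Cmod_sub_le|]. rewrite Cmod_1, Cmod_mult, Cmod_pow.
  apply exp_ineq1_le.
Qed.

Lemma qp_sub1 (w q : C) n : (Cmod q < 1)%R ->
  (Cmod (qp w q n - 1) <= qp_bound w q * (Cmod w / (1 - Cmod q)))%R.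
Proof.
  intros Hq. eapply Rle_trans; [|apply Rmult_le_compat_l, (geom_weight_le w q n Hq)].
  2: left; apply qp_bound_pos.
  induction n; simpl.
  { replace (1 - 1) with (RtoC 0) by ring. rewrite Cmod_0. lra. }
  replace (qp w q n * (1 - w * q ^ n) - 1) with ((qp w q n - 1) - qp w q n * (w * q ^ n)) by ring.
  eapply Rle_trans; [apply Cmod_sub_le|]. rewrite !Cmod_mult, Cmod_pow.
  assert (H1 := qp_upper w q n Hq).
  assert (0 <= Cmod w * Cmod q ^ n)%R by (apply Rmult_le_pos; [apply Cmod_ge_0|apply pow_le, Cmod_ge_0]).
  assert (Cmod (qp w q n) * (Cmod w * Cmod q ^ n) <= qp_bound w q * (Cmod w * Cmod q ^ n))%R
    by (apply Rmult_le_compat_r; auto).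
  nra.
Qed.

Lemma qp_near1 (w q : C) n : (Cmod q < 1)%R -> (Cmod w <= (1 - Cmod q) / 6)%R ->
  (Cmod (qp w q n - 1) <= 3 * (Cmod w / (1 - Cmod q)))%R.
Proof.
  intros hq Hw. eapply Rle_trans; [apply qp_sub1; auto|]. apply Rmult_le_compat_r.
  apply Rdiv_le_0_compat. apply Cmod_ge_0. lra. apply qp_bound_le3; auto. lra.
Qed.

Lemma qp_near1_lower (w q : C) n : (Cmod q < 1)%R -> (Cmod w <= (1 - Cmod q) / 6)%R ->
  (/ 2 <= Cmod (qp w q n))%R.
Proof.
  intros Hq Hw. assert (H1 := qp_near1 w q n Hq Hw). assert (H2 := Cmod_rev 1 (qp w q n)).
  rewrite Cmod_1 in H2. replace (1 - qp w q n) with (- (qp w q n - 1)) in H2 by ring.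
  rewrite Cmod_opp in H2.
  assert (Cmod w / (1 - Cmod q) <= / 6)%R.
  { apply (Rmult_le_reg_r (1 - Cmod q)). lra.
    unfold Rdiv. rewrite Rmult_assoc, Rinv_l by lra. lra. }
  lra.
Qed.

Lemma small_pow (c q : C) (eps : R) : (Cmod q < 1)%R -> (0 < eps)%R ->
  exists m0, forall m, (m >= m0)%nat -> (Cmod (c * q ^ m) <= eps)%R.
Proof.
  intros Hq He. assert (Hc : (0 <= Cmod c)%R) by apply Cmod_ge_0.
  destruct (pow_lt_1_zero (Cmod q)) with (y := (eps / (Cmod c + 1))%R) as [N HN].
  { rewrite Rabs_pos_eq; auto. apply Cmod_ge_0. }
  { apply Rdiv_lt_0_compat; lra. }
  exists N. intros m Hm. specialize (HN m Hm).
  rewrite Rabs_pos_eq in HN by (apply pow_le, Cmod_ge_0).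
  rewrite Cmod_mult, Cmod_pow. assert (0 <= Cmod q ^ m)%R by (apply pow_le, Cmod_ge_0).
  assert (Cmod q ^ m * (Cmod c + 1) <= eps)%R.
  { apply Rlt_le. apply (Rmult_lt_reg_r (/ (Cmod c + 1))). apply Rinv_0_lt_compat; lra.
    rewrite Rmult_assoc, Rinv_r by lra. rewrite Rmult_1_r. exact HN. }
  nra.
Qed.

(* a nonvanishing symbol (c;q)_m stays uniformly away from 0: the finitely many
   first values are nonzero, and the tail (c q^m0; q)_k is close to 1 *)
Lemma qp_lower (c q : C) : (Cmod q < 1)%R -> (forall m, qp c q m <> 0) ->
  exists d, (0 < d)%R /\ forall m, (d <= Cmod (qp c q m))%R.
Proof.
  intros Hq Hc. destruct (small_pow c q ((1 - Cmod q) / 6) Hq) as [m0 Hm0]; [lra|].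
  assert (Hmin : exists d, (0 < d)%R /\ forall m, (m <= m0)%nat -> (d <= Cmod (qp c q m))%R).
  { clear Hm0. induction m0.
    - exists (Cmod (qp c q 0)). split; [apply Cmod_pos_of_ne, Hc|].
      intros m Hm. replace m with 0%nat by lia. lra.
    - destruct IHm0 as [d [Hd Hm]]. exists (Rmin d (Cmod (qp c q (S m0)))).
      split; [apply Rmin_pos; auto; apply Cmod_pos_of_ne, Hc|].
      intros m Hm'. destruct (Nat.eq_dec m (S m0)) as [->|]; [apply Rmin_r|].
      eapply Rle_trans; [apply Rmin_l|]. apply Hm. lia. }
  destruct Hmin as [d [Hd Hdm]].
  exists (d / 2)%R. split; [lra|]. intros m.
  destruct (Compare_dec.le_lt_dec m m0) as [Hle|Hlt]; [specialize (Hdm m Hle); lra|].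
  replace m with (m0 + (m - m0))%nat by lia. rewrite qp_add, Cmod_mult.
  assert (H1 := Hdm m0 (le_n _)).
  assert (H2 := qp_near1_lower (c * q ^ m0) q (m - m0) Hq (Hm0 m0 (le_n _))).
  nra.
Qed.

Lemma qp_shift_lower (c q : C) : (Cmod q < 1)%R -> (forall m, qp c q m <> 0) ->
  exists d, (0 < d)%R /\ forall m k, (d <= Cmod (qp (c * q ^ m) q k))%R.
Proof.
  intros hq hc. destruct (qp_lower c q hq hc) as [d [Hd Hl]].
  assert (HU := qp_bound_pos c q).
  exists (d / qp_bound c q)%R. split; [apply Rdiv_lt_0_compat; auto|].
  intros m k. assert (H1 := Hl (m + k)%nat). rewrite qp_add, Cmod_mult in H1.
  assert (H2 := qp_upper c q m hq). assert (H3 := Cmod_ge_0 (qp (c * q ^ m) q k)).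
  apply (Rmult_le_reg_r (qp_bound c q)); auto. unfold Rdiv. rewrite Rmult_assoc, Rinv_l by lra.
  nra.
Qed.

Definition tozero (e : nat -> R) : Prop :=
  forall eps : R, (eps > 0)%R -> exists N : nat, forall n, (n >= N)%nat -> (e n < eps)%R.

Lemma tozero_geom (r : R) : (0 <= r < 1)%R -> tozero (fun n => r ^ n)%R.
Proof.
  intros Hr eps Heps. destruct (pow_lt_1_zero r) with (y := eps) as [N HN]; auto.
  { rewrite Rabs_pos_eq; lra. }
  exists N. intros n Hn. specialize (HN n Hn). rewrite Rabs_pos_eq in HN; auto. apply pow_le; lra.
Qed.

Lemma tozero_scal (e : nat -> R) (K : R) : (0 <= K)%R -> tozero e -> tozero (fun n => K * e n)%R.
Proof.
  intros HK He eps Heps. destruct (He (eps / (K + 1))%R) as [N HN]; [apply Rdiv_lt_0_compat; lra|].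
  exists N. intros n Hn. specialize (HN n Hn).
  assert (e n * (K + 1) < eps)%R.
  { apply (Rmult_lt_reg_r (/ (K + 1))). apply Rinv_0_lt_compat; lra.
    rewrite Rmult_assoc, Rinv_r by lra. rewrite Rmult_1_r. exact HN. }
  destruct (Rle_lt_dec (e n) 0); nra.
Qed.

Lemma tozero_add (e f : nat -> R) : tozero e -> tozero f -> tozero (fun n => e n + f n)%R.
Proof.
  intros He Hf eps Heps. destruct (He (eps / 2)%R) as [N1 H1]; [lra|].
  destruct (Hf (eps / 2)%R) as [N2 H2]; [lra|]. exists (max N1 N2). intros n Hn.
  specialize (H1 n ltac:(lia)). specialize (H2 n ltac:(lia)). lra.
Qed.

Lemma conv_by (s : nat -> C) (l : C) (e : nat -> R) N0 :
  (forall n, (n >= N0)%nat -> (Cmod (s n - l) <= e n)%R) -> tozero e -> conv s l.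
Proof.
  intros H He eps Heps. destruct (He eps Heps) as [N HN]. exists (max N N0).
  intros n Hn. eapply Rle_lt_trans; [apply H; lia|]. apply HN. lia.
Qed.

Lemma conv_geom_bound (s : nat -> C) (l : C) (K r : R) :
  (0 <= K)%R -> (0 <= r < 1)%R -> (forall n, Cmod (s n - l) <= K * r ^ n)%R -> conv s l.
Proof.
  intros HK Hr H. apply (conv_by _ _ (fun n => K * r ^ n)%R 0); auto.
  apply tozero_scal; auto. apply tozero_geom; auto.
Qed.

Lemma conv_tozero (s : nat -> C) (l : C) : conv s l -> tozero (fun n => Cmod (s n - l)).
Proof. intros H eps He. destruct (H eps He) as [N HN]. exists N. auto. Qed.

Lemma conv_lin (s t : nat -> C) (a b l m : C) : conv s l -> conv t m ->
  conv (fun n => a * s n + b * t n) (a * l + b * m).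
Proof.
  intros Hs Ht. apply (conv_by _ _ (fun n => Cmod a * Cmod (s n - l) + Cmod b * Cmod (t n - m))%R 0).
  - intros n _. replace (a * s n + b * t n - (a * l + b * m)) with (a * (s n - l) + b * (t n - m)) by ring.
    eapply Rle_trans; [apply Cmod_triangle|]. rewrite !Cmod_mult. lra.
  - apply tozero_add; apply tozero_scal; try apply Cmod_ge_0; apply conv_tozero; auto.
Qed.

Lemma conv_ext (s t : nat -> C) l N0 : (forall n, (n >= N0)%nat -> s n = t n) -> conv s l -> conv t l.
Proof.
  intros H Hs eps Heps. destruct (Hs eps Heps) as [N HN]. exists (max N N0). intros n Hn.
  rewrite <- H by lia. apply HN. lia.
Qed.

Lemma conv_sub (s : nat -> C) l (phi : nat -> nat) : (forall k, (phi k >= k)%nat) -> conv s l ->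
  conv (fun k => s (phi k)) l.
Proof.
  intros Hp Hs eps Heps. destruct (Hs eps Heps) as [N HN]. exists N. intros n Hn. apply HN.
  specialize (Hp n). lia.
Qed.

Lemma conv_bound (s : nat -> C) l a (B : R) N0 : conv s l ->
  (forall n, (n >= N0)%nat -> Cmod (s n - a) <= B)%R -> (Cmod (l - a) <= B)%R.
Proof.
  intros Hs H. apply Rnot_lt_le. intro Hlt.
  destruct (Hs (Cmod (l - a) - B)%R) as [N HN]; [lra|].
  specialize (HN (max N N0) ltac:(lia)). specialize (H (max N N0) ltac:(lia)).
  assert (H3 := Cmod_sub_le (s (max N N0) - a) (s (max N N0) - l)).
  replace (s (max N N0) - a - (s (max N N0) - l)) with (l - a) in H3 by ring. lra.
Qed.

Lemma le_of_le_eps (a b : R) : (forall eta, (eta > 0)%R -> (a <= b + eta)%R) -> (a <= b)%R.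
Proof. intros H. apply Rnot_lt_le. intro Hl. specialize (H ((a - b) / 2)%R ltac:(lra)). lra. Qed.

Lemma series_cauchy (g : nat -> R) (M : R) : Un_cv (sum_f_R0 g) M ->
  forall eps, (eps > 0)%R -> exists J, forall m n, (J <= m)%nat -> (m <= n)%nat ->
    (rsum g n - rsum g m < eps)%R.
Proof.
  intros H eps He. destruct (H (eps / 2)%R) as [N HN]; [lra|].
  assert (E : forall n, sum_f_R0 g n = rsum g (S n)).
  { induction n; simpl in *; [ring|]. rewrite IHn. ring. }
  exists (S N). intros m n Hm Hn. destruct m as [|m]; [lia|]. destruct n as [|n]; [lia|].
  assert (A := HN m ltac:(lia)). assert (B := HN n ltac:(lia)).
  rewrite E in A, B. unfold R_dist in A, B. apply Rabs_def2 in A. apply Rabs_def2 in B. lra.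
Qed.

Lemma convolution_geom_tozero (b : nat -> R) (r : R) :
  (forall k, 0 <= b k)%R -> (0 <= r < 1)%R ->
  (forall eps, (eps > 0)%R -> exists J, forall m n, (J <= m)%nat -> (m <= n)%nat ->
    (rsum b n - rsum b m < eps)%R) ->
  tozero (fun N => rsum (fun j => b j * r ^ (N - j)) N)%R.
Proof.
  intros Hb Hr HC eps He. destruct (HC (eps / 2)%R) as [J HJ]; [lra|].
  set (SJ := rsum b J). assert (HSJ : (0 <= SJ)%R) by (apply rsum_nonneg; auto).
  destruct (tozero_scal _ SJ HSJ (tozero_geom r Hr) (eps / 2)%R) as [N1 HN1]; [lra|].
  exists (J + N1)%nat. intros N HN.
  replace N with (J + (N - J))%nat by lia. rewrite rsum_split.
  (* the head is damped by r^(N-J), the tail is small by the Cauchy criterion *)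
  assert (Head : (rsum (fun j => b j * r ^ (J + (N - J) - j)) J <= SJ * r ^ (N - J))%R).
  { unfold SJ. rewrite Rmult_comm, <- rsum_scal. apply rsum_le. intros k Hk.
    replace (J + (N - J) - k)%nat with ((N - J) + (J - k))%nat by lia. rewrite pow_add.
    assert (0 <= r ^ (N - J))%R by (apply pow_le; lra).
    assert (r ^ (J - k) <= 1)%R by (apply pow_le_1; lra).
    assert (0 <= b k * r ^ (N - J))%R by (apply Rmult_le_pos; auto). nra. }
  assert (Tail : (rsum (fun i => b (J + i)%nat * r ^ (J + (N - J) - (J + i))) (N - J) < eps / 2)%R).
  { eapply Rle_lt_trans with (rsum (fun i => b (J + i)%nat) (N - J)).
    - apply rsum_le. intros k _. assert (r ^ (J + (N - J) - (J + k)) <= 1)%R by (apply pow_le_1; lra).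
      assert (0 <= r ^ (J + (N - J) - (J + k)))%R by (apply pow_le; lra).
      specialize (Hb (J + k)%nat). nra.
    - assert (H := HJ J (J + (N - J))%nat ltac:(lia) ltac:(lia)). rewrite rsum_split in H. lra. }
  assert (H4 := HN1 (N - J)%nat ltac:(lia)). simpl in H4. lra.
Qed.

(** The Bailey kernel and its column sums *)

Section BaileyKernel.
Variables q z x : C.
Hypothesis hq : (Cmod q < 1)%R.
Hypothesis hx : (Cmod x < 1)%R.
Hypothesis hxz : forall m, qp (x * z) q m <> 0.
Hypothesis hxn : forall m, qp x q m <> 0.

(* The coefficient of alpha_j in the n-th term of the beta-series:
   K_j(n) = (z;q)_n (q;q)_(n-1) x^n / ((q;q)_(n-j) (xz;q)_(n+j)). *)
Definition kernel (j n : nat) : C :=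
  qp z q n * qp q q (n - 1) * x ^ n / (qp q q (n - j) * qp (x * z) q (n + j)).

Definition col_partial (j N : nat) : C := csum (fun k => kernel j (j + k)) N.
Definition col_weight (j : nat) : C := qp z q j * qp q q (j - 1) * x ^ j.
Definition col_sum (j : nat) : C := col_weight j / (qp (x * z) q j * qp x q j).

Let hqq : forall m, qp q q m <> 0 := fun m => qp_qq_ne0 q m hq.
Let hxz_f : forall n, 1 - x * z * q ^ n <> 0 := fun n => qp_factor_ne0 _ q n hxz.
Let hx_f : forall n, 1 - x * q ^ n <> 0 := fun n => qp_factor_ne0 _ q n hxn.
Let hq_f : forall n, 1 - q ^ S n <> 0 := fun n => one_sub_powS_ne0 q n hq.
Let hx1 : 1 - x <> 0 := one_sub_ne0 x hx.

Lemma Cmod_x_range : (0 <= Cmod x < 1)%R.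
Proof. split; auto. apply Cmod_ge_0. Qed.

Lemma kernel_bound : exists K, (0 <= K)%R /\ forall j k,
  (Cmod (kernel j (j + k)) <= K * Cmod (col_weight j) * Cmod x ^ k)%R.
Proof.
  destruct (qp_lower q q hq hqq) as [dQ [HdQ HQl]].
  destruct (qp_lower (x * z) q hq hxz) as [dP [HdP HPl]].
  set (U := (qp_bound z q * qp_bound q q)%R).
  assert (HU : (0 < U)%R) by (apply Rmult_lt_0_compat; apply qp_bound_pos).
  exists (U / (dQ * dP))%R. split; [apply Rlt_le, Rdiv_lt_0_compat; nra|].
  intros j k. unfold kernel, col_weight. replace (j + k - j)%nat with k by lia.
  (* (c;q)_(j+k) = (c;q)_j (c q^j; q)_k with the second factor bounded *)
  assert (Hsplit : forall c i, (Cmod (qp c q (i + k)) <= Cmod (qp c q i) * qp_bound c q)%R).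
  { intros c i. rewrite qp_add, Cmod_mult. apply Rmult_le_compat_l; [apply Cmod_ge_0|].
    eapply Rle_trans; [apply qp_upper; auto|]. apply qp_bound_mono, Cmod_mul_pow_le; auto. }
  assert (HQ : (Cmod (qp q q (j + k - 1)) <= Cmod (qp q q (j - 1)) * qp_bound q q)%R).
  { destruct j as [|j].
    - simpl. rewrite Cmod_1, Rmult_1_l. apply qp_upper; auto.
    - replace (S j + k - 1)%nat with (j + k)%nat by lia. replace (S j - 1)%nat with j by lia.
      apply Hsplit. }
  assert (Hden : (dQ * dP <= Cmod (qp q q k * qp (x * z) q (j + k + j)))%R).
  { rewrite Cmod_mult. apply Rmult_le_compat; [lra | lra | apply HQl | apply HPl]. }
  rewrite Cpow_add_r.
  eapply Rle_trans.
  { apply Cmod_div_le with (d := (dQ * dP)%R)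
      (A := (Cmod (qp z q j) * qp_bound z q * (Cmod (qp q q (j - 1)) * qp_bound q q) *
             (Cmod x ^ j * Cmod x ^ k))%R); auto.
    - apply Cmult_neq_0; auto.
    - rewrite !Cmod_mult, !Cmod_pow. apply Rmult_le_compat; try apply Rmult_le_pos;
        try apply Cmod_ge_0; try apply pow_le, Cmod_ge_0; [|lra].
      apply Rmult_le_compat; try apply Cmod_ge_0; auto.
    - apply Rmult_lt_0_compat; auto. }
  rewrite !Cmod_mult, !Cmod_pow. apply Req_le. unfold U. field. lra.
Qed.

(* column 1 telescopes *)
Definition col1_rest (n : nat) : C := qp z q n * x ^ n / ((1 - x) * qp (x * z) q n).

Lemma col_partial_1 N : col_partial 1 N = col_sum 1 - col1_rest (S N).
Proof.
  assert (Hstep : forall k, kernel 1 (1 + k) = col1_rest (1 + k) - col1_rest (2 + k)).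
  { intros k. unfold kernel, col1_rest.
    replace (1 + k - 1)%nat with k by lia. replace (1 + k + 1)%nat with (S (S k)) by lia.
    replace (2 + k)%nat with (S (S k)) by lia. replace (1 + k)%nat with (S k) by lia.
    simpl qp. rewrite (Cpow_S x (S k)).
    assert (H1 := hxz_f (S k)). assert (H2 := hxz (S k)). assert (H3 := hqq k).
    simpl in H2. field. repeat split; auto. }
  unfold col_partial. rewrite (csum_ext _ (fun k => col1_rest (1 + k) - col1_rest (S (1 + k))))
    by (intros; apply Hstep).
  rewrite (csum_telescope (fun k => col1_rest (1 + k))). f_equal.
  unfold col1_rest, col_sum, col_weight. simpl. assert (H1 := hxz_f 0). simpl in H1.
  field. split; auto. intro E. apply H1. rewrite <- E. ring.
Qed.

(* Column j+1 is obtained from column j by the ratio rho_j, up to a telescoping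
   defect; this gives the recursion for the column sums. *)
Definition col_ratio (j : nat) : C :=
  (1 - z * q ^ j) * (1 - q ^ j) * x / ((1 - x * z * q ^ j) * (1 - x * q ^ j)).
Definition col_defect (j k : nat) : C :=
  (1 - col_ratio j) / (1 - x) * kernel j (j + k) * (1 - q ^ k).

Lemma kernel_next_col j k :
  kernel (S j) (S j + k) = kernel j (j + S k) * (1 - q ^ S k) / (1 - x * z * q ^ (j + S k + j)).
Proof.
  unfold kernel. replace (S j + k)%nat with (j + S k)%nat by lia.
  replace (j + S k - S j)%nat with k by lia. replace (j + S k - j)%nat with (S k) by lia.
  replace (j + S k + S j)%nat with (S (j + S k + j)) by lia.
  rewrite (qp_S _ q (j + S k + j)), (qp_S q q k).
  replace (q * q ^ k) with (q ^ S k) by reflexivity.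
  assert (H1 := hxz_f (j + S k + j)). assert (H2 := hxz (j + S k + j)).
  assert (H3 := hqq k). assert (H4 := hq_f k).
  field. repeat split; auto.
Qed.

Lemma kernel_next_row j k : (j >= 1)%nat ->
  kernel j (j + S k) = kernel j (j + k) * ((1 - z * q ^ (j + k)) * (1 - q ^ (j + k)) * x) /
                        ((1 - q ^ S k) * (1 - x * z * q ^ (j + k + j))).
Proof.
  intros Hj. destruct j as [|j]; [lia|]. unfold kernel.
  replace (S j + S k)%nat with (S (S j + k)) by lia.
  replace (S (S j + k) - S j)%nat with (S k) by lia. replace (S j + k - S j)%nat with k by lia.
  replace (S (S j + k) - 1)%nat with (S j + k)%nat by lia.
  replace (S j + k - 1)%nat with (j + k)%nat by lia.
  replace (S (S j + k) + S j)%nat with (S (S j + k + S j)) by lia.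
  rewrite (qp_S z q (S j + k)), (qp_S _ q (S j + k + S j)), (qp_S q q k).
  change (qp q q (S j + k)) with (qp q q (S (j + k))). rewrite (qp_S q q (j + k)).
  rewrite (Cpow_S x (S j + k)).
  replace (q * q ^ k) with (q ^ S k) by reflexivity.
  replace (q * q ^ (j + k)) with (q ^ (S j + k)) by reflexivity.
  assert (H1 := hxz_f (S j + k + S j)). assert (H2 := hxz (S j + k + S j)).
  assert (H3 := hqq k). assert (H4 := hq_f k). assert (H5 := hqq (j + k)).
  field. repeat split; auto.
Qed.

Lemma kernel_telescope j k : (j >= 1)%nat ->
  kernel j (j + k) * ((1 - q ^ k) / (1 - x * z * q ^ (j + k + j)) - col_ratio j) =
  col_defect j k - col_defect j (S k).
Proof.
  intros Hj. unfold col_defect. rewrite (kernel_next_row j k Hj). unfold col_ratio.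
  replace (j + k + j)%nat with (j + j + k)%nat by lia.
  rewrite !Cpow_add_r, (Cpow_S q k).
  assert (H1 := hxz_f (j + j + k)). rewrite !Cpow_add_r in H1.
  assert (H4 := hq_f k). rewrite Cpow_S in H4.
  assert (H5 := hxz_f j). assert (H6 := hx_f j).
  field. repeat split; auto.
Qed.

Lemma col_partial_step j N : (j >= 1)%nat ->
  col_partial (S j) N = col_ratio j * col_partial j (S N) - col_defect j (S N).
Proof.
  intros Hj. unfold col_partial.
  assert (E : csum (fun k => kernel (S j) (S j + k)) N =
              csum (fun k => kernel j (j + k) * ((1 - q ^ k) / (1 - x * z * q ^ (j + k + j)))) (S N)).
  { rewrite csum_shift. replace (1 - q ^ 0) with (RtoC 0) by (simpl; ring).
    rewrite (csum_ext (fun k => kernel (S j) (S j + k))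
      (fun k => kernel j (j + S k) * ((1 - q ^ S k) / (1 - x * z * q ^ (j + S k + j))))).
    - unfold Cdiv. ring.
    - intros k _. rewrite kernel_next_col. unfold Cdiv. ring. }
  rewrite E, (csum_ext _ (fun k => (col_defect j k - col_defect j (S k)) + col_ratio j * kernel j (j + k))).
  - rewrite csum_add, csum_telescope, csum_scal.
    unfold col_defect. replace (1 - q ^ 0) with (RtoC 0) by (simpl; ring). ring.
  - intros k _. rewrite <- kernel_telescope by auto. ring.
Qed.

(* the closed forms satisfy the same recursion *)
Lemma col_sum_step j : (j >= 1)%nat -> col_sum (S j) = col_ratio j * col_sum j.
Proof.
  intros Hj. destruct j as [|j]; [lia|]. unfold col_sum, col_weight, col_ratio.
  replace (S (S j) - 1)%nat with (S j) by lia. replace (S j - 1)%nat with j by lia.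
  rewrite (qp_S z q (S j)), (qp_S _ q (S j)), (qp_S x q (S j)), (qp_S q q j), (Cpow_S x (S j)).
  replace (q * q ^ j) with (q ^ S j) by reflexivity.
  assert (H1 := hxz_f (S j)). assert (H2 := hxz (S j)). assert (H3 := hxn (S j)).
  assert (H4 := hx_f (S j)).
  field. repeat split; auto.
Qed.

(* the defect vanishes in the limit, since the column entries decay geometrically *)
Lemma col_defect_conv j : conv (col_defect j) 0.
Proof.
  destruct kernel_bound as [K [HK HT]].
  set (c := Cmod ((1 - col_ratio j) / (1 - x))).
  apply (conv_geom_bound _ _ (c * (K * Cmod (col_weight j)) * 2) (Cmod x));
    [repeat apply Rmult_le_pos; try lra; try apply Cmod_ge_0 | apply Cmod_x_range|].
  intros n. unfold col_defect. replace (_ - 0) with ((1 - col_ratio j) / (1 - x) * kernel j (j + n) * (1 - q ^ n)) by ring.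
  rewrite !Cmod_mult. fold c. specialize (HT j n).
  assert (H1 : (Cmod (1 - q ^ n) <= 2)%R).
  { eapply Rle_trans; [apply Cmod_sub_le|]. rewrite Cmod_1. assert (H := Cmod_pow_le1 q n hq). lra. }
  assert (0 <= c)%R by apply Cmod_ge_0. assert (0 <= Cmod (kernel j (j + n)))%R by apply Cmod_ge_0.
  assert (0 <= Cmod (1 - q ^ n))%R by apply Cmod_ge_0.
  assert (Cmod (kernel j (j + n)) * Cmod (1 - q ^ n) <= K * Cmod (col_weight j) * Cmod x ^ n * 2)%R
    by (apply Rmult_le_compat; auto).
  replace (c * (K * Cmod (col_weight j)) * 2 * Cmod x ^ n)%R
    with (c * (K * Cmod (col_weight j) * Cmod x ^ n * 2))%R by ring.
  rewrite Rmult_assoc. apply Rmult_le_compat_l; auto.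
Qed.

Lemma col_partial_conv j : (j >= 1)%nat -> conv (col_partial j) (col_sum j).
Proof.
  induction j as [|j IH]; [lia|]. intros _. destruct j as [|j].
  - destruct (qp_lower (x * z) q hq hxz) as [dP [HdP HPl]].
    assert (Hx1 : (0 < Cmod (1 - x))%R) by (apply Cmod_pos_of_ne, hx1).
    apply (conv_geom_bound _ _ (qp_bound z q * Cmod x / (Cmod (1 - x) * dP)) (Cmod x));
      [|apply Cmod_x_range|].
    { apply Rmult_le_pos; [apply Rmult_le_pos; [left; apply qp_bound_pos|apply Cmod_ge_0]|].
      left. apply Rinv_0_lt_compat, Rmult_lt_0_compat; auto. }
    intros n. rewrite col_partial_1.
    replace (col_sum 1 - col1_rest (S n) - col_sum 1) with (- col1_rest (S n)) by ring.
    rewrite Cmod_opp. unfold col1_rest.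
    eapply Rle_trans.
    { apply Cmod_div_le with (d := (Cmod (1 - x) * dP)%R) (A := (qp_bound z q * Cmod x ^ S n)%R).
      - apply Cmult_neq_0; auto.
      - rewrite Cmod_mult, Cmod_pow. apply Rmult_le_compat_r; [apply pow_le, Cmod_ge_0|].
        apply qp_upper; auto.
      - apply Rmult_lt_0_compat; auto.
      - rewrite Cmod_mult. apply Rmult_le_compat_l; [lra | apply HPl]. }
    apply Req_le. simpl. field. split; lra.
  - assert (H1 : conv (fun N => col_partial (S j) (S N)) (col_sum (S j)))
      by (apply (conv_sub _ _ S); [intros; lia | apply IH; lia]).
    assert (H2 : conv (fun N => col_defect (S j) (S N)) 0)
      by (apply (conv_sub _ _ S); [intros; lia | apply col_defect_conv]).
    assert (H3 := conv_lin _ _ (col_ratio (S j)) (-1) _ _ H1 H2).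
    replace (col_sum (S (S j))) with (col_ratio (S j) * col_sum (S j) + -1 * 0)
      by (rewrite (col_sum_step (S j)) by lia; ring).
    apply (conv_ext _ _ _ 0%nat) with (2 := H3). intros n _.
    rewrite (col_partial_step (S j)) by lia. ring.
Qed.

Lemma col_tail_bound : exists K, (0 <= K)%R /\ forall j M, (j >= 1)%nat ->
  (Cmod (col_sum j - col_partial j M) <= K * Cmod (col_weight j) * Cmod x ^ M / (1 - Cmod x))%R.
Proof.
  destruct kernel_bound as [K [HK HT]]. exists K. split; auto. intros j M Hj.
  apply (conv_bound (col_partial j) (col_sum j) (col_partial j M) _ M (col_partial_conv j Hj)).
  intros n Hn. replace n with (M + (n - M))%nat by lia. unfold col_partial. rewrite csum_split.
  replace (csum (fun k => kernel j (j + k)) M + csum (fun i => kernel j (j + (M + i))) (n - M) -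
     csum (fun k => kernel j (j + k)) M) with (csum (fun i => kernel j (j + (M + i))) (n - M)) by ring.
  eapply Rle_trans; [apply Cmod_csum_le|].
  eapply Rle_trans.
  { apply rsum_le with (g := fun i => (K * Cmod (col_weight j) * Cmod x ^ M * Cmod x ^ i)%R).
    intros i _. rewrite Rmult_assoc, <- pow_add. apply HT. }
  rewrite rsum_scal. unfold Rdiv. apply Rmult_le_compat_l.
  - repeat apply Rmult_le_pos; auto; try apply Cmod_ge_0. apply pow_le, Cmod_ge_0.
  - apply rsum_geom_le, Cmod_x_range.
Qed.
End BaileyKernel.

Section BaileyLemma.
Variables q z x : C.
Hypothesis hq : (Cmod q < 1)%R.
Hypothesis hx : (Cmod x < 1)%R.
Hypothesis hxz : forall m, qp (x * z) q m <> 0.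
Hypothesis hxn : forall m, qp x q m <> 0.
Variables (alpha beta : nat -> C) (lA lB : C) (MA : R).
(* (alpha, beta) is a Bailey pair relative to xz/q *)
Hypothesis ha0 : alpha 0%nat = 1.
Hypothesis hbailey : forall n,
  beta n = csum (fun j => alpha j / (qp q q (n - j) * qp (x * z) q (n + j))) (S n).

Definition beta_term (n : nat) : C := qp z q n * qp q q (n - 1) * x ^ n * beta n.
Definition alpha_term (n : nat) : C :=
  qp z q n * qp q q (n - 1) / (qp (x * z) q n * qp x q n) * x ^ n * alpha n.

Hypothesis halpha_abs : Un_cv (sum_f_R0 (fun k => Cmod (alpha_term (S k)))) MA.
Hypothesis hbeta_lim : conv1 beta_term lB.
Hypothesis halpha_lim : conv1 alpha_term lA.

Lemma beta_term_expand n : beta_term n = csum (fun j => alpha j * kernel q z x j n) (S n).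
Proof.
  unfold beta_term. rewrite hbailey, <- csum_scal. apply csum_ext. intros j Hj.
  unfold kernel. assert (H1 := qp_qq_ne0 q (n - j) hq). assert (H2 := hxz (n + j)).
  field. split; auto.
Qed.

Lemma beta_partial_by_columns N :
  csum beta_term (S N) = csum (fun j => alpha j * col_partial q z x j (S N - j)) (S N).
Proof.
  rewrite (csum_ext beta_term (fun n => csum (fun j => alpha j * kernel q z x j n) (S n)))
    by (intros; apply beta_term_expand).
  rewrite csum_triangle. apply csum_ext. intros j _. unfold col_partial. rewrite csum_scal. reflexivity.
Qed.

Definition column_error (N : nat) : C :=
  csum (fun j => alpha (S j) * (col_sum q z x (S j) - col_partial q z x (S j) (N - j))) N.

(* column 0 carries the alpha-free part; the other columns give the alpha-series *)
Lemma kernel0_partial N : csum (fun k => kernel q z x 0 (S k)) N =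
  csum (fun k => beta_term (S k)) N - csum (fun k => alpha_term (S k)) N + column_error N.
Proof.
  assert (H := beta_partial_by_columns N). rewrite !csum_shift in H.
  replace (S N - 0)%nat with (S N) in H by lia.
  unfold col_partial at 1 in H. rewrite csum_shift, ha0, Nat.add_0_r in H.
  assert (Hb0 : beta_term 0 = 1) by (unfold beta_term; rewrite hbailey; simpl; rewrite ha0; field).
  assert (Hk0 : kernel q z x 0 0 = 1) by (unfold kernel; simpl; field).
  rewrite Hb0, Hk0 in H. simpl (S N - S _)%nat in H.
  rewrite (csum_ext (fun j => alpha (S j) * col_partial q z x (S j) (N - j))
    (fun j => alpha_term (S j) - alpha (S j) * (col_sum q z x (S j) - col_partial q z x (S j) (N - j))))
    in H by (intros; unfold alpha_term, col_sum, col_weight, Cdiv; ring).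
  rewrite csum_sub in H. unfold column_error. simpl (0 + _)%nat in H.
  set (K0 := csum (fun k => kernel q z x 0 (S k)) N) in *.
  set (A := csum (fun k => alpha_term (S k)) N) in *.
  set (E := csum (fun j => alpha (S j) *
                 (col_sum q z x (S j) - col_partial q z x (S j) (N - j))) N) in *.
  replace K0 with (1 * (1 + K0) + (A - E) - 1 - A + E) by ring. rewrite <- H. ring.
Qed.

Lemma column_error_bound : exists C, (0 <= C)%R /\ forall N,
  (Cmod (column_error N) <= C * rsum (fun j => Cmod (alpha_term (S j)) * Cmod x ^ (N - j)) N)%R.
Proof.
  destruct (col_tail_bound q z x hq hx hxz hxn) as [Kt [HKt Ht]].
  assert (H1x : (0 < 1 - Cmod x)%R) by lra.
  set (U := (qp_bound (x * z) q * qp_bound x q)%R).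
  assert (HU : (0 < U)%R) by (apply Rmult_lt_0_compat; apply qp_bound_pos).
  exists (Kt * U / (1 - Cmod x))%R. split.
  { apply Rmult_le_pos; [apply Rmult_le_pos; lra|]. left; apply Rinv_0_lt_compat; auto. }
  intros N. unfold column_error.
  eapply Rle_trans; [apply Cmod_csum_le|]. rewrite <- rsum_scal. apply rsum_le. intros j Hj.
  rewrite Cmod_mult. specialize (Ht (S j) (N - j)%nat ltac:(lia)).
  assert (Hw : (Cmod (alpha (S j)) * Cmod (col_weight q z x (S j)) <= Cmod (alpha_term (S j)) * U)%R).
  { assert (E : col_weight q z x (S j) * alpha (S j) =
                alpha_term (S j) * (qp (x * z) q (S j) * qp x q (S j))).
    { unfold col_weight, alpha_term. field. split; auto. }
    rewrite Rmult_comm, <- Cmod_mult, E, Cmod_mult. apply Rmult_le_compat_l; [apply Cmod_ge_0|].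
    rewrite Cmod_mult. apply Rmult_le_compat; try apply Cmod_ge_0; apply qp_upper; auto. }
  assert (0 <= Cmod (alpha (S j)))%R by apply Cmod_ge_0.
  assert (0 <= Kt * Cmod x ^ (N - j) / (1 - Cmod x))%R.
  { apply Rmult_le_pos; [apply Rmult_le_pos; auto; apply pow_le, Cmod_ge_0|].
    left; apply Rinv_0_lt_compat; auto. }
  eapply Rle_trans; [apply Rmult_le_compat_l; [auto|exact Ht]|].
  unfold Rdiv in *. nra.
Qed.

Theorem bailey_transform : conv1 (kernel q z x 0) (lB - lA).
Proof.
  destruct column_error_bound as [C [HC HE]].
  apply (conv_by _ _ (fun N => Cmod (csum (fun k => beta_term (S k)) N - lB) +
      Cmod (csum (fun k => alpha_term (S k)) N - lA) +
      C * rsum (fun j => Cmod (alpha_term (S j)) * Cmod x ^ (N - j)) N)%R 0).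
  - intros N _. rewrite kernel0_partial.
    replace (csum (fun k => beta_term (S k)) N - csum (fun k => alpha_term (S k)) N + column_error N
      - (lB - lA)) with ((csum (fun k => beta_term (S k)) N - lB)
      - (csum (fun k => alpha_term (S k)) N - lA) + column_error N) by ring.
    eapply Rle_trans; [apply Cmod_triangle|]. specialize (HE N).
    assert (H := Cmod_sub_le (csum (fun k => beta_term (S k)) N - lB)
                             (csum (fun k => alpha_term (S k)) N - lA)). lra.
  - repeat apply tozero_add; try (apply conv_tozero; auto).
    apply tozero_scal; auto. apply convolution_geom_tozero.
    + intros; apply Cmod_ge_0.
    + split; [apply Cmod_ge_0|auto].
    + apply (series_cauchy _ _ halpha_abs).
Qed.
End BaileyLemma.

(** The alpha-free series  F(z,q,x) = sum_(n>=1) (z;q)_n x^n / ((xz;q)_n (1 - q^n)) *)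

Definition fpartial (q z x : C) (N : nat) : C := csum (fun k => kernel q z x 0 (S k)) N.

Lemma kernel0_S (q z x : C) n : (Cmod q < 1)%R -> qp (x * z) q (S n) <> 0 ->
  kernel q z x 0 (S n) = qp z q (S n) * x ^ S n / ((1 - q ^ S n) * qp (x * z) q (S n)).
Proof.
  intros hq hxz. unfold kernel. rewrite Nat.sub_0_r, Nat.add_0_r, (qp_S q q n).
  replace (S n - 1)%nat with n by lia.
  assert (H1 := qp_qq_ne0 q n hq). assert (H2 := one_sub_powS_ne0 q n hq).
  rewrite (Cpow_S q n) in H2 |- *. field. repeat split; auto.
Qed.

Section Shift.
Variables q x : C.
Hypothesis hq : (Cmod q < 1)%R.

Definition shift_ratio (z : C) (n : nat) : C := qp (z * q) q n / qp (x * z * q) q n.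

Lemma fpartial_shift z N : (forall m, qp (x * z) q m <> 0) ->
  fpartial q z x N - fpartial q (z * q) x N = - (x * z) / (1 - x * z) * (1 - x ^ N * shift_ratio z N).
Proof.
  intros hxz.
  assert (hxzq : forall m, qp (x * z * q) q m <> 0).
  { intros m E. apply (hxz (S m)). rewrite qp_S_left, E. ring. }
  assert (h1 : 1 - x * z <> 0) by (intro E; apply (hxz 1%nat); simpl; rewrite <- E; ring).
  assert (Hterm : forall n, kernel q z x 0 (S n) - kernel q (z * q) x 0 (S n) =
     - (x * z) / (1 - x * z) * (x ^ n * shift_ratio z n - x ^ S n * shift_ratio z (S n))).
  { intros n. rewrite (kernel0_S q z x n hq (hxz (S n))).
    replace (x * (z * q)) with (x * z * q) by ring. rewrite (kernel0_S q (z * q) x n hq);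
      [|replace (x * (z * q)) with (x * z * q) by ring; apply hxzq].
    replace (x * (z * q)) with (x * z * q) by ring.
    unfold shift_ratio. rewrite (qp_S_left z q n), (qp_S_left (x * z) q n).
    rewrite (qp_S (z * q) q n), (qp_S (x * z * q) q n), (Cpow_S x n).
    assert (H1 := hxzq n). assert (H2 := qp_factor_ne0 _ _ n hxzq).
    assert (H3 := one_sub_powS_ne0 q n hq). rewrite Cpow_S in H3 |- *.
    field. repeat split; auto. }
  unfold fpartial. rewrite <- csum_sub, (csum_ext _ _ _ (fun k _ => Hterm k)), csum_scal.
  rewrite (csum_telescope (fun k => x ^ k * shift_ratio z k)). unfold shift_ratio. simpl.
  f_equal. f_equal. f_equal. field.
Qed.

Lemma fpartial_shift_bound z : (forall m, qp (x * z) q m <> 0) ->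
  exists K, (0 <= K)%R /\ forall m N,
  (Cmod (fpartial q (z * q ^ m) x N - fpartial q (z * q ^ S m) x N
         + x * (z * q ^ m) / (1 - x * (z * q ^ m))) <= K * Cmod x ^ N)%R.
Proof.
  intros hxz. destruct (qp_shift_lower (x * z) q hq hxz) as [d [Hd Hl]].
  set (K := (Cmod (x * z) / d * (qp_bound (z * q) q / d))%R).
  exists K. split.
  { unfold K. apply Rmult_le_pos; apply Rdiv_le_0_compat; auto; try apply Cmod_ge_0.
    left; apply qp_bound_pos. }
  intros m N. set (w := z * q ^ m).
  assert (hxw : forall k, qp (x * w) q k <> 0).
  { intros k. replace (x * w) with (x * z * q ^ m) by (unfold w; ring). apply qp_shift_ne0; auto. }
  replace (z * q ^ S m) with (w * q) by (unfold w; rewrite Cpow_S; ring).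
  rewrite (fpartial_shift w N hxw).
  replace (- (x * w) / (1 - x * w) * (1 - x ^ N * shift_ratio w N) + x * w / (1 - x * w))
    with (x * w / (1 - x * w) * (x ^ N * shift_ratio w N)) by (unfold Cdiv; ring).
  assert (Hf : 1 - x * w <> 0) by (intro E; apply (hxw 1%nat); simpl; rewrite <- E; ring).
  assert (Hfl : (d <= Cmod (1 - x * w))%R).
  { specialize (Hl m 1%nat). simpl in Hl. replace (1 * (1 - x * z * q ^ m * 1)) with (1 - x * w) in Hl
      by (unfold w; ring). exact Hl. }
  assert (Hr : (Cmod (shift_ratio w N) <= qp_bound (z * q) q / d)%R).
  { unfold shift_ratio. replace (x * w * q) with (x * z * q ^ S m) by (unfold w; rewrite Cpow_S; ring).
    apply Cmod_div_le; [apply qp_shift_ne0; auto | | exact Hd | apply Hl].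
    eapply Rle_trans; [apply qp_upper; auto|]. apply qp_bound_mono; auto.
    replace (w * q) with (z * q * q ^ m) by (unfold w; ring). apply Cmod_mul_pow_le; auto. }
  assert (Hw : (Cmod (x * w / (1 - x * w)) <= Cmod (x * z) / d)%R).
  { apply Cmod_div_le; auto. replace (x * w) with (x * z * q ^ m) by (unfold w; ring).
    apply Cmod_mul_pow_le; auto. }
  rewrite Cmod_mult, Cmod_mult, Cmod_pow.
  assert (0 <= Cmod x ^ N)%R by (apply pow_le, Cmod_ge_0).
  assert (0 <= Cmod (shift_ratio w N))%R by apply Cmod_ge_0.
  assert (0 <= Cmod (x * w / (1 - x * w)))%R by apply Cmod_ge_0.
  unfold K. replace (Cmod (x * z) / d * (qp_bound (z * q) q / d) * Cmod x ^ N)%R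
    with (Cmod (x * z) / d * (Cmod x ^ N * (qp_bound (z * q) q / d)))%R by ring.
  apply Rmult_le_compat; auto; [apply Rmult_le_pos; auto|].
  apply Rmult_le_compat_l; auto.
Qed.
End Shift.

Lemma kernel0_at_zero (q x : C) n : (Cmod q < 1)%R -> kernel q 0 x 0 (S n) = x ^ S n / (1 - q ^ S n).
Proof.
  intros hq. assert (H0 : qp (x * 0) q (S n) = 1) by (replace (x * 0) with (RtoC 0) by ring; apply qp_zero).
  rewrite kernel0_S, H0, qp_zero; auto; [|rewrite H0; apply C1_nz].
  field. apply one_sub_powS_ne0; auto.
Qed.

Lemma kernel0_near_zero (q x w : C) n : (Cmod q < 1)%R ->
  (Cmod w <= (1 - Cmod q) / 6)%R -> (Cmod (x * w) <= (1 - Cmod q) / 6)%R ->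
  (Cmod (kernel q w x 0 (S n) - kernel q 0 x 0 (S n)) <=
   Cmod x ^ S n * (6 * (Cmod w + Cmod (x * w)) / ((1 - Cmod q) * (1 - Cmod q))))%R.
Proof.
  intros hq Hw Hxw. set (r := Cmod q) in *. assert (Hr : (0 < 1 - r)%R) by lra.
  assert (HP := qp_near1_lower (x * w) q (S n) hq Hxw).
  assert (HP0 : qp (x * w) q (S n) <> 0) by (intro E; rewrite E, Cmod_0 in HP; lra).
  assert (Hd := one_sub_powS_lb q n hq). assert (Hd0 := one_sub_powS_ne0 q n hq).
  rewrite kernel0_at_zero, kernel0_S by auto.
  replace (qp w q (S n) * x ^ S n / ((1 - q ^ S n) * qp (x * w) q (S n)) - x ^ S n / (1 - q ^ S n))
    with (x ^ S n / (1 - q ^ S n) * (((qp w q (S n) - 1) - (qp (x * w) q (S n) - 1)) / qp (x * w) q (S n)))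
    by (field; split; auto).
  assert (H1 : (Cmod (x ^ S n / (1 - q ^ S n)) <= Cmod x ^ S n / (1 - r))%R)
    by (apply Cmod_div_le; auto; rewrite Cmod_pow; lra).
  assert (H2 : (Cmod (((qp w q (S n) - 1) - (qp (x * w) q (S n) - 1)) / qp (x * w) q (S n))
               <= (3 * (Cmod w / (1 - r)) + 3 * (Cmod (x * w) / (1 - r))) / / 2)%R).
  { apply Cmod_div_le; auto; [|lra]. eapply Rle_trans; [apply Cmod_sub_le|].
    apply Rplus_le_compat; apply qp_near1; auto. }
  rewrite Cmod_mult. eapply Rle_trans.
  { apply Rmult_le_compat; try apply Cmod_ge_0; eassumption. }
  apply Req_le. field. lra.
Qed.

Lemma fpartial_near_zero (q z x : C) : (Cmod q < 1)%R -> (Cmod x < 1)%R ->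
  exists C M0, (0 <= C)%R /\ forall m N, (m >= M0)%nat ->
  (Cmod (fpartial q (z * q ^ m) x N - fpartial q 0 x N) <= C * Cmod q ^ m)%R.
Proof.
  intros hq hx. set (r := Cmod q). assert (Hr : (0 < 1 - r)%R) by (unfold r; lra).
  assert (Hx : (0 <= Cmod x)%R) by apply Cmod_ge_0.
  destruct (small_pow z q ((1 - r) / 6) hq) as [M1 HM1]; [lra|].
  destruct (small_pow (x * z) q ((1 - r) / 6) hq) as [M2 HM2]; [lra|].
  set (S0 := (Cmod z + Cmod (x * z))%R).
  assert (HS0 : (0 <= S0)%R) by (unfold S0; assert (H := Cmod_ge_0 z); assert (H' := Cmod_ge_0 (x * z)); lra).
  exists (6 * S0 / ((1 - r) * (1 - r) * (1 - Cmod x)))%R, (max M1 M2). split.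
  { apply Rdiv_le_0_compat; [lra|]. apply Rmult_lt_0_compat; [nra|lra]. }
  intros m N Hm.
  set (c := (6 * (S0 * r ^ m) / ((1 - r) * (1 - r)))%R).
  assert (Hterm : forall k, (Cmod (kernel q (z * q ^ m) x 0 (S k) - kernel q 0 x 0 (S k))
                             <= c * Cmod x ^ S k)%R).
  { intros k. rewrite Rmult_comm. unfold c.
    replace (S0 * r ^ m)%R with (Cmod (z * q ^ m) + Cmod (x * (z * q ^ m)))%R.
    - apply kernel0_near_zero; auto; [apply HM1|rewrite Cmult_assoc; apply HM2]; lia.
    - unfold S0, r. rewrite Cmult_assoc, !Cmod_mult, !Cmod_pow. ring. }
  unfold fpartial. rewrite <- csum_sub.
  eapply Rle_trans; [apply Cmod_csum_le|]. eapply Rle_trans; [apply rsum_le; intros k _; apply Hterm|].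
  rewrite rsum_scal.
  assert (Hg : (rsum (fun k => Cmod x ^ S k) N <= / (1 - Cmod x))%R).
  { eapply Rle_trans; [|apply (rsum_geom_le (Cmod x) N); lra]. apply rsum_le. intros k _.
    simpl. assert (0 <= Cmod x ^ k)%R by (apply pow_le; auto).
    assert (Cmod x ^ k <= 1)%R by (apply pow_le_1; lra). nra. }
  assert (Hc : (0 <= c)%R).
  { unfold c. apply Rdiv_le_0_compat; [|nra]. assert (0 <= r ^ m)%R by (apply pow_le, Cmod_ge_0). nra. }
  eapply Rle_trans; [apply Rmult_le_compat_l; [exact Hc|exact Hg]|].
  apply Req_le. unfold c. field. split; lra.
Qed.

(** The parity identity  F(z,q,x) + F(z,q,-x) = 2 F(z^2,q^2,x^2) *)

Lemma pow_sq (c : C) n : c ^ (2 * n) = (c * c) ^ n.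
Proof. rewrite Cpow_mult_r. f_equal. simpl. ring. Qed.

(* at z = 0 it is the splitting of the Lambert series into even and odd terms *)
Lemma lambert_pairs (q x : C) K :
  csum (fun k => x ^ S k / (1 - q ^ S k) + (- x) ^ S k / (1 - q ^ S k)) (2 * K) =
  2 * csum (fun k => (x * x) ^ S k / (1 - (q * q) ^ S k)) K.
Proof.
  induction K; [simpl; ring|].
  replace (2 * S K)%nat with (S (S (2 * K))) by lia.
  change (csum ?f (S (S ?n))) with (csum f n + f n + f (S n)). rewrite IHK.
  change (csum ?f (S K)) with (csum f K + f K). replace (S (S (2 * K))) with (2 * S K)%nat by lia.
  rewrite (Cpow_S x (2 * K)), (Cpow_S (- x) (2 * K)), !pow_sq.
  replace (- x * - x) with (x * x) by ring. unfold Cdiv. ring.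
Qed.

Section Parity.
Variables q z x : C.
Hypothesis hq : (Cmod q < 1)%R.
Hypothesis hx : (Cmod x < 1)%R.
Hypothesis hp1 : forall m, qp (x * z) q m <> 0.
Hypothesis hp2 : forall m, qp (- x * z) q m <> 0.
Hypothesis hp3 : forall m, qp (x * x * (z * z)) (q * q) m <> 0.

Definition parity_partial (N : nat) (w : C) : C :=
  fpartial q w x N + fpartial q w (- x) N - 2 * fpartial (q * q) (w * w) (x * x) N.

Let hqq : (Cmod (q * q) < 1)%R := Cmod_sq_lt1 q hq.

Lemma sq_shift (w : C) m : w * q ^ m * (w * q ^ m) = w * w * (q * q) ^ m.
Proof. rewrite Cpow_mult_l. ring. Qed.

(* the explicit shift terms of the three series cancel, so the combination is
   invariant under z -> zq up to O(|x|^N) *)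
Lemma parity_partial_step : exists K, (0 <= K)%R /\ forall m N,
  (Cmod (parity_partial N (z * q ^ m) - parity_partial N (z * q ^ S m)) <= K * Cmod x ^ N)%R.
Proof.
  destruct (fpartial_shift_bound q x hq z hp1) as [K1 [HK1 H1]].
  destruct (fpartial_shift_bound q (- x) hq z hp2) as [K2 [HK2 H2]].
  destruct (fpartial_shift_bound (q * q) (x * x) hqq (z * z) hp3) as [K3 [HK3 H3]].
  exists (K1 + K2 + 2 * K3)%R. split; [lra|]. intros m N.
  specialize (H1 m N). specialize (H2 m N). specialize (H3 m N).
  rewrite Cmod_opp in H2. unfold parity_partial. rewrite !sq_shift.
  set (v := x * (z * q ^ m)) in *.
  assert (hv1 : 1 - v <> 0) by (unfold v; rewrite Cmult_assoc; apply qp_factor_ne0; auto).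
  assert (hv2 : 1 + v <> 0).
  { replace (1 + v) with (1 - - x * z * q ^ m) by (unfold v; ring). apply qp_factor_ne0; auto. }
  replace (- x * (z * q ^ m)) with (- v) in H2 by (unfold v; ring).
  replace (x * x * (z * z * (q * q) ^ m)) with (v * v) in H3 by (unfold v; rewrite Cpow_mult_l; ring).
  match type of H1 with (Cmod ?e <= _)%R => set (e1 := e) in H1 end.
  match type of H2 with (Cmod ?e <= _)%R => set (e2 := e) in H2 end.
  match type of H3 with (Cmod ?e <= _)%R => set (e3 := e) in H3 end.
  replace (_ - _) with (e1 + e2 - 2 * e3).
  2:{ unfold e1, e2, e3. field. repeat split; auto.
      replace (1 - v * v) with ((1 - v) * (1 + v)) by ring. apply Cmult_neq_0; auto.
      replace (1 - - v) with (1 + v) by ring. auto. }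
  eapply Rle_trans; [apply Cmod_comb|].
  assert (H4 := Cmod_sq_pow_le x N hx). assert (H5 := Cmod_ge_0 e3). nra.
Qed.

Lemma parity_partial_iter : exists K, (0 <= K)%R /\ forall M N,
  (Cmod (parity_partial N z - parity_partial N (z * q ^ M)) <= INR M * K * Cmod x ^ N)%R.
Proof.
  destruct parity_partial_step as [K [HK H]]. exists K. split; auto. intros M N. induction M.
  - replace (z * q ^ 0) with z by (simpl; ring). unfold Cminus. rewrite Cplus_opp_r, Cmod_0. simpl. lra.
  - replace (parity_partial N z - parity_partial N (z * q ^ S M)) with
      ((parity_partial N z - parity_partial N (z * q ^ M)) +
       (parity_partial N (z * q ^ M) - parity_partial N (z * q ^ S M))) by ring.
    eapply Rle_trans; [apply Cmod_triangle|]. specialize (H M N). rewrite S_INR. lra.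
Qed.

Lemma parity_partial_near_zero : exists C M0, (0 <= C)%R /\ forall m N, (m >= M0)%nat ->
  (Cmod (parity_partial N (z * q ^ m) - parity_partial N 0) <= C * Cmod q ^ m)%R.
Proof.
  destruct (fpartial_near_zero q z x hq hx) as [C1 [M1 [HC1 H1]]].
  destruct (fpartial_near_zero q z (- x) hq) as [C2 [M2 [HC2 H2]]]; [rewrite Cmod_opp; auto|].
  destruct (fpartial_near_zero (q * q) (z * z) (x * x) hqq) as [C3 [M3 [HC3 H3]]];
    [apply Cmod_sq_lt1; auto|].
  exists (C1 + C2 + 2 * C3)%R, (max M1 (max M2 M3)). split; [lra|]. intros m N Hm.
  specialize (H1 m N ltac:(lia)). specialize (H2 m N ltac:(lia)). specialize (H3 m N ltac:(lia)).
  unfold parity_partial. rewrite sq_shift. replace (0 * 0) with (RtoC 0) by ring.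
  match type of H1 with (Cmod ?e <= _)%R => set (e1 := e) in H1 end.
  match type of H2 with (Cmod ?e <= _)%R => set (e2 := e) in H2 end.
  match type of H3 with (Cmod ?e <= _)%R => set (e3 := e) in H3 end.
  replace (_ - _) with (e1 + e2 - 2 * e3) by (unfold e1, e2, e3; ring).
  eapply Rle_trans; [apply Cmod_comb|].
  assert (Hqq : (Cmod (q * q) ^ m <= Cmod q ^ m)%R) by (apply Cmod_sq_pow_le; auto).
  assert (0 <= Cmod e3)%R by apply Cmod_ge_0. nra.
Qed.

Lemma parity_partial_at_zero : exists C0, (0 <= C0)%R /\ forall K,
  (Cmod (parity_partial (2 * K) 0) <= C0 * Cmod x ^ K)%R.
Proof.
  set (s := Cmod (q * q)). assert (Hs : (s < 1)%R) by (apply Cmod_sq_lt1; auto).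
  assert (Hs0 : (0 <= s)%R) by apply Cmod_ge_0. assert (Hx : (0 <= Cmod x)%R) by apply Cmod_ge_0.
  set (f := fun k => (x * x) ^ S k / (1 - (q * q) ^ S k)).
  exists (2 / ((1 - s) * (1 - Cmod x)))%R. split.
  { apply Rdiv_le_0_compat; [lra|]. apply Rmult_lt_0_compat; lra. }
  intros K. unfold parity_partial, fpartial. replace (0 * 0) with (RtoC 0) by ring.
  rewrite !(csum_ext (fun k => kernel _ 0 _ 0 (S k)) (fun k => _ ^ S k / (1 - _ ^ S k)))
    by (intros; apply kernel0_at_zero; auto).
  rewrite <- csum_add, lambert_pairs. fold f.
  replace (2 * K)%nat with (K + K)%nat by lia. rewrite csum_split.
  replace (2 * csum f K - 2 * (csum f K + csum (fun i => f (K + i)%nat) K))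
    with (- (2 * csum (fun i => f (K + i)%nat) K)) by ring.
  rewrite Cmod_opp, Cmod_mult. replace (Cmod 2) with 2%R by (rewrite Cmod_R, Rabs_pos_eq; lra).
  assert (Htail : (Cmod (csum (fun i => f (K + i)%nat) K) <= Cmod x ^ K / ((1 - s) * (1 - Cmod x)))%R).
  { eapply Rle_trans; [apply Cmod_csum_le|].
    apply Rle_trans with (rsum (fun i => Cmod x ^ K / (1 - s) * Cmod x ^ i) K)%R.
    - apply rsum_le. intros i _. unfold f.
      apply Rle_trans with (Cmod x ^ S (K + i) / (1 - s))%R.
      + apply Cmod_div_le; [apply one_sub_powS_ne0; auto | | lra | apply one_sub_powS_lb; auto].
        rewrite Cmod_pow. apply Cmod_sq_pow_le; auto.
      + rewrite <- tech_pow_Rmult, pow_add. unfold Rdiv.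
        assert (0 <= Cmod x ^ K * Cmod x ^ i)%R by (apply Rmult_le_pos; apply pow_le; auto).
        assert (0 < / (1 - s))%R by (apply Rinv_0_lt_compat; lra).
        assert (Cmod x * (Cmod x ^ K * Cmod x ^ i) <= Cmod x ^ K * Cmod x ^ i)%R by nra. nra.
    - rewrite rsum_scal. unfold Rdiv. rewrite Rinv_mult, <- Rmult_assoc.
      apply Rmult_le_compat_l; [apply Rmult_le_pos; [apply pow_le; auto|left; apply Rinv_0_lt_compat; lra]|].
      apply rsum_geom_le. lra. }
  replace (2 / ((1 - s) * (1 - Cmod x)) * Cmod x ^ K)%R
    with (2 * (Cmod x ^ K / ((1 - s) * (1 - Cmod x))))%R by (field; lra).
  lra.
Qed.

(* If the three series converge, their combination vanishes: it is invariant
   under z -> zq (up to errors vanishing as N -> oo), continuous at z = 0,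
   and vanishes at z = 0. *)
Theorem parity_identity (F1 F2 F3 : C) :
  conv1 (kernel q z x 0) F1 -> conv1 (kernel q z (- x) 0) F2 ->
  conv1 (kernel (q * q) (z * z) (x * x) 0) F3 -> F1 + F2 - 2 * F3 = 0.
Proof.
  intros C1 C2 C3. set (D := F1 + F2 - 2 * F3).
  assert (HD : conv (fun K => parity_partial (2 * K) z) D).
  { assert (H := conv_lin _ _ 1 (-2) _ _ (conv_lin _ _ 1 1 _ _ C1 C2) C3).
    apply (conv_sub _ _ (fun K => (2 * K)%nat)) in H; [|intros; lia].
    replace D with (1 * (1 * F1 + 1 * F2) + -2 * F3) by (unfold D; ring).
    apply (conv_ext _ _ _ 0%nat) with (2 := H). intros n _. unfold parity_partial, fpartial. ring. }
  destruct parity_partial_iter as [K' [HK' HI]].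
  destruct parity_partial_near_zero as [C [M0 [HC HL]]].
  destruct parity_partial_at_zero as [C0 [HC0 HZ]].
  assert (Hx : (0 <= Cmod x < 1)%R) by (split; auto; apply Cmod_ge_0).
  assert (HM : forall M, (M >= M0)%nat -> (Cmod D <= C * Cmod q ^ M)%R).
  { intros M HM. apply le_of_le_eps. intros eta Heta.
    assert (Hz : tozero (fun K => (INR M * K' + C0) * Cmod x ^ K)%R).
    { apply tozero_scal; [|apply tozero_geom; auto]. assert (0 <= INR M)%R by apply pos_INR. nra. }
    destruct (Hz eta Heta) as [N1 HN1]. replace D with (D - 0) by ring.
    apply (conv_bound _ _ 0 _ N1 HD). intros K HK. specialize (HN1 K HK).
    replace (parity_partial (2 * K) z - 0) with
      ((parity_partial (2 * K) z - parity_partial (2 * K) (z * q ^ M)) +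
       (parity_partial (2 * K) (z * q ^ M) - parity_partial (2 * K) 0) +
       parity_partial (2 * K) 0) by ring.
    eapply Rle_trans; [apply Cmod_triangle|].
    eapply Rle_trans; [apply Rplus_le_compat_r, Cmod_triangle|].
    specialize (HI M (2 * K)%nat). specialize (HL M (2 * K)%nat HM). specialize (HZ K).
    assert (Hp : (Cmod x ^ (2 * K) <= Cmod x ^ K)%R).
    { replace (2 * K)%nat with (K + K)%nat by lia. rewrite pow_add.
      assert (0 <= Cmod x ^ K)%R by (apply pow_le; lra).
      assert (Cmod x ^ K <= 1)%R by (apply pow_le_1; lra). nra. }
    assert (0 <= INR M * K')%R by (apply Rmult_le_pos; auto; apply pos_INR).
    assert (INR M * K' * Cmod x ^ (2 * K) <= INR M * K' * Cmod x ^ K)%R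
      by (apply Rmult_le_compat_l; auto).
    nra. }
  apply Cmod_eq_0, Rle_antisym; [|apply Cmod_ge_0].
  apply le_of_le_eps. intros eta Heta.
  destruct (tozero_scal _ C HC (tozero_geom (Cmod q) (conj (Cmod_ge_0 q) hq)) eta Heta) as [N HN].
  specialize (HN (max N M0) ltac:(lia)). specialize (HM (max N M0) ltac:(lia)). lra.
Qed.
End Parity.

(** Transfer to the pair representation of complex numbers used in the statement *)

(* Defs is imported last: its names (Cdiv, Copp, RtoC, ...) must shadow Coquelicot's
   in the statement of the corollary *)
Close Scope C_scope.
From Pilot Require Import Defs.

Definition toC (u : Cx) : Complex.C := (Defs.Re u, Defs.Im u).

Lemma tC_add u v : toC (Cadd u v) = Cplus (toC u) (toC v).
Proof. reflexivity. Qed.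
Lemma tC_opp u : toC (Defs.Copp u) = Complex.Copp (toC u).
Proof. reflexivity. Qed.
Lemma tC_sub u v : toC (Csub u v) = Cminus (toC u) (toC v).
Proof. reflexivity. Qed.
Lemma tC_mul u v : toC (Cmul u v) = Cmult (toC u) (toC v).
Proof. reflexivity. Qed.
Lemma tC_R r : toC (Defs.RtoC r) = Complex.RtoC r.
Proof. reflexivity. Qed.
Lemma tC_inv u : toC (Defs.Cinv u) = Complex.Cinv (toC u).
Proof. unfold toC, Defs.Cinv, Complex.Cinv. simpl. f_equal; f_equal; ring. Qed.
Lemma tC_div u v : toC (Defs.Cdiv u v) = Complex.Cdiv (toC u) (toC v).
Proof. unfold Defs.Cdiv, Complex.Cdiv. rewrite tC_mul, tC_inv. reflexivity. Qed.
Lemma tC_pow u n : toC (Defs.Cpow u n) = Complex.Cpow (toC u) n.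
Proof. induction n; [reflexivity|]. simpl Defs.Cpow. rewrite tC_mul, IHn. apply Cmult_comm. Qed.
Lemma tC_norm u : Cnorm u = Cmod (toC u).
Proof. unfold Cnorm, Cmod, toC. simpl. f_equal. ring. Qed.
Lemma tC_inj u v : toC u = toC v -> u = v.
Proof. destruct u, v. unfold toC. simpl. intros H. injection H. intros -> ->. reflexivity. Qed.
Lemma tC_ne0 u : u <> C0 -> toC u <> Complex.RtoC 0.
Proof. intros H E. apply H, tC_inj. rewrite E. reflexivity. Qed.

Lemma tC_qpoch x q n : toC (qpoch x q n) = qp (toC x) (toC q) n.
Proof. induction n; [reflexivity|]. simpl qpoch. rewrite tC_mul, IHn, tC_sub, tC_mul, tC_pow. reflexivity. Qed.

Lemma tC_Csum0 f n : toC (Csum0 f n) = csum (fun k => toC (f k)) (S n).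
Proof. induction n; simpl Csum0; [simpl; ring|]. rewrite tC_add, IHn. reflexivity. Qed.

Lemma tC_series f l : Cseries1_to f l -> conv1 (fun n => toC (f n)) (toC l).
Proof.
  intros H eps He. destruct (H eps He) as [N HN]. exists N. intros n Hn. specialize (HN n Hn).
  assert (E : forall M, toC (Cpartial1 f M) = csum (fun k => toC (f (S k))) M).
  { induction M; [reflexivity|]. simpl Cpartial1. rewrite tC_add, IHM. reflexivity. }
  rewrite tC_norm, tC_sub, E in HN. exact HN.
Qed.

Lemma tC_abs f : Cseries1_abs_conv f -> exists M, Un_cv (sum_f_R0 (fun k => Cmod (toC (f (S k))))) M.
Proof.
  intros [M H]. exists M. replace (fun k => Cmod (toC (f (S k)))) with (fun k => Cnorm (f (S k))); auto.
  apply functional_extensionality. intros. apply tC_norm.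
Qed.

Lemma tC_bailey a q (alpha beta : nat -> Cx) : bailey_pair a q alpha beta ->
  toC (alpha 0%nat) = Complex.RtoC 1 /\
  forall n, toC (beta n) = csum (fun j => Complex.Cdiv (toC (alpha j))
       (Cmult (qp (toC q) (toC q) (n - j)) (qp (toC (Cmul a q)) (toC q) (n + j)))) (S n).
Proof.
  intros [H0 [H1 H]]. split; [rewrite H0; reflexivity|]. intros [|n].
  - rewrite H1. simpl. rewrite H0. unfold toC. simpl. apply injective_projections; simpl; field.
  - rewrite H by lia. rewrite tC_Csum0. apply csum_ext. intros j _.
    rewrite tC_div, tC_mul, !tC_qpoch. reflexivity.
Qed.

Lemma norm_lt_nonzero (p z : Cx) : Cnorm p < Cnorm z -> toC z <> Complex.RtoC 0.
Proof. intros hpz E. rewrite !tC_norm, E, Cmod_0 in hpz. assert (H := Cmod_ge_0 (toC p)). lra. Qed.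

Lemma norm_div_lt1 (p z : Cx) : Cnorm p < Cnorm z -> Cmod (toC (Defs.Cdiv p z)) < 1.
Proof.
  intros hpz. assert (hz := norm_lt_nonzero p z hpz).
  rewrite tC_div, Cmod_div, <- !tC_norm by exact hz.
  assert (0 < Cnorm z) by (rewrite tC_norm; apply Cmod_pos_of_ne, hz).
  apply (Rmult_lt_reg_r (Cnorm z)); auto. unfold Rdiv. rewrite Rmult_assoc, Rinv_l; lra.
Qed.

(* with x = p/z and p = aq, the product xz equals aq, so (xz;q)_n does not vanish *)
Lemma xz_eq (a q z p : Cx) : Cnorm p < Cnorm z -> toC p = toC (Cmul a q) ->
  Cmult (toC (Defs.Cdiv p z)) (toC z) = toC (Cmul a q).
Proof.
  intros hpz hp. assert (hz := norm_lt_nonzero p z hpz).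
  rewrite tC_div, <- hp. field. exact hz.
Qed.

Lemma xz_nonvanishing (a q z p : Cx) : Cnorm p < Cnorm z -> toC p = toC (Cmul a q) ->
  (forall m, qpoch (Cmul a q) q m <> C0) ->
  forall m, qp (Cmult (toC (Defs.Cdiv p z)) (toC z)) (toC q) m <> Complex.RtoC 0.
Proof.
  intros hpz hp hd m. rewrite (xz_eq a q z p hpz hp), <- tC_qpoch. apply tC_ne0, hd.
Qed.

Lemma bailey_instance (a q z p : Cx) (alpha beta : nat -> Cx) (lB lA : Cx) :
  Cnorm q < 1 -> Cnorm p < Cnorm z -> toC p = toC (Cmul a q) ->
  (forall m, qpoch (Cmul a q) q m <> C0) -> (forall m, qpoch (Defs.Cdiv p z) q m <> C0) ->
  bailey_pair a q alpha beta ->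
  Cseries1_abs_conv (fun n => Cmul (Cmul (Defs.Cdiv (Cmul (qpoch z q n) (qpoch q q (n - 1)))
       (Cmul (qpoch p q n) (qpoch (Defs.Cdiv p z) q n))) (Defs.Cpow (Defs.Cdiv p z) n)) (alpha n)) ->
  Cseries1_to (fun n => Cmul (Cmul (Cmul (qpoch z q n) (qpoch q q (n - 1)))
       (Defs.Cpow (Defs.Cdiv p z) n)) (beta n)) lB ->
  Cseries1_to (fun n => Cmul (Cmul (Defs.Cdiv (Cmul (qpoch z q n) (qpoch q q (n - 1)))
       (Cmul (qpoch p q n) (qpoch (Defs.Cdiv p z) q n))) (Defs.Cpow (Defs.Cdiv p z) n)) (alpha n)) lA ->
  conv1 (kernel (toC q) (toC z) (toC (Defs.Cdiv p z)) 0) (Cminus (toC lB) (toC lA)).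
Proof.
  intros hq hpz hp hd1 hd2 hB habs hBc hAc.
  assert (Exz := xz_eq a q z p hpz hp).
  destruct (tC_bailey _ _ _ _ hB) as [ha0 hB'].
  destruct (tC_abs _ habs) as [MA hMA].
  rewrite tC_norm in hq.
  assert (EA : forall n, alpha_term (toC q) (toC z) (toC (Defs.Cdiv p z)) (fun k => toC (alpha k)) n =
    toC (Cmul (Cmul (Defs.Cdiv (Cmul (qpoch z q n) (qpoch q q (n - 1)))
       (Cmul (qpoch p q n) (qpoch (Defs.Cdiv p z) q n))) (Defs.Cpow (Defs.Cdiv p z) n)) (alpha n))).
  { intros n. unfold alpha_term. rewrite Exz, <- hp, !tC_mul, (tC_div (Cmul (qpoch z q n) _)).
    rewrite !tC_mul, !tC_qpoch, tC_pow.
    reflexivity. }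
  apply (bailey_transform _ _ _ hq (norm_div_lt1 p z hpz) (xz_nonvanishing a q z p hpz hp hd1))
    with (alpha := fun k => toC (alpha k)) (beta := fun k => toC (beta k)) (MA := MA); auto.
  - intros m. rewrite <- tC_qpoch. apply tC_ne0, hd2.
  - intros n. rewrite hB', Exz. reflexivity.
  - replace (fun k => Cmod (alpha_term _ _ _ _ (S k))) with (fun k =>
      Cmod (toC (Cmul (Cmul (Defs.Cdiv (Cmul (qpoch z q (S k)) (qpoch q q (S k - 1)))
       (Cmul (qpoch p q (S k)) (qpoch (Defs.Cdiv p z) q (S k)))) (Defs.Cpow (Defs.Cdiv p z) (S k)))
       (alpha (S k))))); auto.
    apply functional_extensionality. intros k. rewrite EA. reflexivity.
  - apply (conv_ext _ _ _ 0%nat) with (2 := tC_series _ _ hBc). intros n _. apply csum_ext.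
    intros k _. unfold beta_term. rewrite !tC_mul, !tC_qpoch, tC_pow. reflexivity.
  - apply (conv_ext _ _ _ 0%nat) with (2 := tC_series _ _ hAc). intros n _. apply csum_ext.
    intros k _. symmetry. apply EA.
Qed.

Lemma Cnorm_opp (u : Cx) : Cnorm (Defs.Copp u) = Cnorm u.
Proof. rewrite !tC_norm, tC_opp, Cmod_opp. reflexivity. Qed.

Lemma Cnorm_sq_lt (q a z : Cx) : Cnorm (Cmul q a) < Cnorm z ->
  Cnorm (Cmul (Cmul q q) (Cmul a a)) < Cnorm (Cmul z z).
Proof.
  rewrite !tC_norm, !tC_mul, !Cmod_mult. intros H.
  assert (0 <= Cmod (toC q) * Cmod (toC a)) by (apply Rmult_le_pos; apply Cmod_ge_0). nra.
Qed.

Lemma tC_div_opp (p z : Cx) : toC (Defs.Cdiv (Defs.Copp p) z) = Complex.Copp (toC (Defs.Cdiv p z)).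
Proof. rewrite !tC_div, tC_opp. unfold Complex.Cdiv. ring. Qed.

Lemma tC_div_sq (q a z : Cx) : Cnorm (Cmul q a) < Cnorm z ->
  toC (Defs.Cdiv (Cmul (Cmul q q) (Cmul a a)) (Cmul z z)) =
  Cmult (toC (Defs.Cdiv (Cmul q a) z)) (toC (Defs.Cdiv (Cmul q a) z)).
Proof.
  intros hz. assert (Hz := norm_lt_nonzero _ _ hz). rewrite !tC_div, !tC_mul. field. exact Hz.
Qed.

Lemma combination_of_differences (b1 b2 b3 a1 a2 a3 : Complex.C) :
  ((b1 - a1) + (b2 - a2) - 2 * (b3 - a3) = 0)%C -> (b1 + b2 - 2 * b3 = a1 + a2 - 2 * a3)%C.
Proof.
  intros H. replace (b1 + b2 - 2 * b3)%C with ((b1 - a1) + (b2 - a2) - 2 * (b3 - a3) + (a1 + a2 - 2 * a3))%C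
    by ring. rewrite H. ring.
Qed.

Theorem corollary2p5
  (alpha beta : Cx -> Cx -> nat -> Cx) (a q z : Cx)
  (hq : Cnorm q < 1)
  (hBa : bailey_pair a q (alpha a q) (beta a q))
  (hBna : bailey_pair (Copp a) q (alpha (Copp a) q) (beta (Copp a) q))
  (hBa2 : bailey_pair (Cmul a a) (Cmul q q)
            (alpha (Cmul a a) (Cmul q q)) (beta (Cmul a a) (Cmul q q)))
  (hz : Cnorm (Cmul q a) < Cnorm z)
  (* no denominator vanishes *)
  (hd1 : forall m, qpoch (Cmul a q) q m <> C0)
  (hd2 : forall m, qpoch (Cmul (Copp a) q) q m <> C0)
  (hd3 : forall m, qpoch (Cmul (Cmul a a) (Cmul q q)) (Cmul q q) m <> C0)
  (hd4 : forall m, qpoch (Cmul q a) q m <> C0)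
  (hd5 : forall m, qpoch (Cdiv (Cmul q a) z) q m <> C0)
  (hd6 : forall m, qpoch (Copp (Cmul q a)) q m <> C0)
  (hd7 : forall m, qpoch (Cdiv (Copp (Cmul q a)) z) q m <> C0)
  (hd8 : forall m, qpoch (Cmul (Cmul q q) (Cmul a a)) (Cmul q q) m <> C0)
  (hd9 : forall m, qpoch (Cdiv (Cmul (Cmul q q) (Cmul a a)) (Cmul z z)) (Cmul q q) m <> C0)
  (lB1 lB2 lB3 lA1 lA2 lA3 : Cx) :
  let q2 := Cmul q q in
  let a2 := Cmul a a in
  let z2 := Cmul z z in
  let tB1 := fun n => Cmul (Cmul (Cmul (qpoch z q n) (qpoch q q (n - 1)))
                 (Cpow (Cdiv (Cmul q a) z) n)) (beta a q n) in
  let tB2 := fun n => Cmul (Cmul (Cmul (qpoch z q n) (qpoch q q (n - 1)))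
                 (Cpow (Cdiv (Copp (Cmul q a)) z) n)) (beta (Copp a) q n) in
  let tB3 := fun n => Cmul (Cmul (Cmul (qpoch z2 q2 n) (qpoch q2 q2 (n - 1)))
                 (Cpow (Cdiv (Cmul q2 a2) z2) n)) (beta a2 q2 n) in
  let tA1 := fun n => Cmul (Cmul (Cdiv (Cmul (qpoch z q n) (qpoch q q (n - 1)))
                   (Cmul (qpoch (Cmul q a) q n) (qpoch (Cdiv (Cmul q a) z) q n)))
                 (Cpow (Cdiv (Cmul q a) z) n)) (alpha a q n) in
  let tA2 := fun n => Cmul (Cmul (Cdiv (Cmul (qpoch z q n) (qpoch q q (n - 1)))
                   (Cmul (qpoch (Copp (Cmul q a)) q n)
                         (qpoch (Cdiv (Copp (Cmul q a)) z) q n)))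
                 (Cpow (Cdiv (Copp (Cmul q a)) z) n)) (alpha (Copp a) q n) in
  let tA3 := fun n => Cmul (Cmul (Cdiv (Cmul (qpoch z2 q2 n) (qpoch q2 q2 (n - 1)))
                   (Cmul (qpoch (Cmul q2 a2) q2 n) (qpoch (Cdiv (Cmul q2 a2) z2) q2 n)))
                 (Cpow (Cdiv (Cmul q2 a2) z2) n)) (alpha a2 q2 n) in
  Cseries1_abs_conv tB1 -> Cseries1_abs_conv tB2 -> Cseries1_abs_conv tB3 ->
  Cseries1_abs_conv tA1 -> Cseries1_abs_conv tA2 -> Cseries1_abs_conv tA3 ->
  Cseries1_to tB1 lB1 -> Cseries1_to tB2 lB2 -> Cseries1_to tB3 lB3 ->
  Cseries1_to tA1 lA1 -> Cseries1_to tA2 lA2 -> Cseries1_to tA3 lA3 ->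
  Csub (Cadd lB1 lB2) (Cmul (RtoC 2) lB3) = Csub (Cadd lA1 lA2) (Cmul (RtoC 2) lA3).
Proof.
  intros q2 a2 z2 tB1 tB2 tB3 tA1 tA2 tA3 _ _ _ habs1 habs2 habs3 hB1 hB2 hB3 hA1 hA2 hA3.
  (* the three Bailey pairs, with parameters p = qa, -qa, q^2 a^2 *)
  assert (hz2 := Cnorm_sq_lt q a z hz).
  assert (hz' : Cnorm (Copp (Cmul q a)) < Cnorm z) by (rewrite Cnorm_opp; exact hz).
  assert (hq2 : Cnorm (Cmul q q) < 1) by (rewrite tC_norm, tC_mul; apply Cmod_sq_lt1; rewrite <- tC_norm; exact hq).
  assert (hp1 : toC (Cmul q a) = toC (Cmul a q)) by (rewrite !tC_mul; ring).
  assert (hp2 : toC (Copp (Cmul q a)) = toC (Cmul (Copp a) q)) by (rewrite tC_opp, !tC_mul, tC_opp; ring).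
  assert (hp3 : toC (Cmul q2 a2) = toC (Cmul a2 q2)) by (rewrite !tC_mul; ring).
  assert (R1 := bailey_instance a q z _ _ _ lB1 lA1 hq hz hp1 hd1 hd5 hBa habs1 hB1 hA1).
  assert (R2 := bailey_instance (Copp a) q z _ _ _ lB2 lA2 hq hz' hp2 hd2 hd7 hBna habs2 hB2 hA2).
  assert (R3 := bailey_instance a2 (Cmul q q) (Cmul z z) _ _ _ lB3 lA3 hq2 hz2 hp3 hd3 hd9 hBa2 habs3 hB3 hA3).
  assert (N1 := xz_nonvanishing _ _ _ _ hz hp1 hd1).
  assert (N2 := xz_nonvanishing _ _ _ _ hz' hp2 hd2).
  assert (N3 := xz_nonvanishing _ _ _ _ hz2 hp3 hd3).
  (* all three are instances of the parity identity with x = qa/z *)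
  rewrite tC_div_opp in R2, N2. rewrite (tC_div_sq q a z hz), !tC_mul in R3, N3.
  apply tC_inj. rewrite !tC_sub, !tC_add, !tC_mul, !tC_R. apply combination_of_differences.
  rewrite tC_norm in hq.
  exact (parity_identity _ _ _ hq (norm_div_lt1 _ _ hz) N1 N2 N3 _ _ _ R1 R2 R3).
Qed.
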